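(* Let $\mathcal K$ be a real Hilbert space, let $f\colon\mathcal K\to\,]-\infty,+\infty]$ be a proper lower semicontinuous convex function, let $\alpha,\beta\in\,]0,+\infty[$, let $B\colon\mathcal K\to\mathcal K$ be monotone and $\beta$-Lipschitzian, let $(\eta_n)_{n\in\mathbb N}$ be a summable sequence in $[0,+\infty[$, and let $(U_n)_{n\in\mathbb N}$ be a sequence in $\mathcal P_\alpha(\mathcal K)$ with $\mu=\sup_n\|U_n\|<+\infty$ and $(1+\eta_n)U_{n+1}\succcurlyeq U_n$ for all $n$. Let $x_0\in\mathcal K$, let $\varepsilon\in\,]0,\min\{1,1/(\mu\beta+1)\}[$, and let $(\gamma_n)_{n\in\mathbb N}$ be a sequence in $[\varepsilon,(1-\varepsilon)/(\beta\mu)]$. Suppose the variational inequality $$\text{find } \bar x\in\mathcal K \text{ such that } (\forall y\in\mathcal K)\ \ \langle \bar x-y, B\bar x\rangle+f(\bar x)\le f(y)$$ has at least one solution, and for every $n\in\mathbb N$ set $$y_n=x_n-\gamma_nU_nBx_n,\quad p_n=\operatorname*{argmin}_{x\in\mathcal K}\Big(f(x)+\tfrac{1}{2\gamma_n}\|x-y_n\|_{U_n^{-1}}^2\Big),\quad q_n=p_n-\gamma_nU_nBp_n,\quad x_{n+1}=x_n-y_n+q_n.$$ Then $(x_n)_{n\in\mathbb N}$ converges weakly to a solution of the variational inequality.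
   Context: $\mathcal P_\alpha(\mathcal K)=\{M\in\mathcal B(\mathcal K): M^*=M,\ \langle Mx,x\rangle\ge\alpha\|x\|^2\ \forall x\}$, where $\mathcal B(\mathcal K)$ denotes bounded linear operators on $\mathcal K$. For self-adjoint $M_1,M_2$, $M_1\succcurlyeq M_2$ means $\langle M_1x,x\rangle\ge\langle M_2x,x\rangle$ for all $x$. For $M\in\mathcal P_\alpha(\mathcal K)$, $\|x\|_M=\sqrt{\langle Mx,x\rangle}$. *)

From Stdlib Require Import Reals Lra ClassicalEpsilon.
Open Scope R_scope.

Record HilbertSpace := {
  hcar :> Type;
  hzero : hcar;
  hadd : hcar -> hcar -> hcar;
  hopp : hcar -> hcar;
  hscal : R -> hcar -> hcar;
  hinner : hcar -> hcar -> R;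
  hadd_assoc : forall x y z, hadd x (hadd y z) = hadd (hadd x y) z;
  hadd_comm : forall x y, hadd x y = hadd y x;
  hadd_zero : forall x, hadd x hzero = x;
  hadd_opp : forall x, hadd x (hopp x) = hzero;
  hscal_one : forall x, hscal 1 x = x;
  hscal_assoc : forall a b x, hscal a (hscal b x) = hscal (a * b) x;
  hscal_distr_v : forall a x y, hscal a (hadd x y) = hadd (hscal a x) (hscal a y);
  hscal_distr_s : forall a b x, hscal (a + b) x = hadd (hscal a x) (hscal b x);
  hinner_sym : forall x y, hinner x y = hinner y x;
  hinner_add_l : forall x y z, hinner (hadd x y) z = hinner x z + hinner y z;
  hinner_scal_l : forall a x y, hinner (hscal a x) y = a * hinner x y;
  hinner_pos : forall x, 0 <= hinner x x;
  hinner_def : forall x, hinner x x = 0 -> x = hzero;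
  hcomplete : forall u : nat -> hcar,
    (forall e, e > 0 -> exists N, forall m n, (m >= N)%nat -> (n >= N)%nat ->
        sqrt (hinner (hadd (u m) (hopp (u n))) (hadd (u m) (hopp (u n)))) < e) ->
    exists l, forall e, e > 0 -> exists N, forall n, (n >= N)%nat ->
        sqrt (hinner (hadd (u n) (hopp l)) (hadd (u n) (hopp l))) < e
}.

Section HS.
Context {K : HilbertSpace}.

Definition hsub (x y : K) : K := hadd K x (hopp K y).
Definition inner (x y : K) : R := hinner K x y.
Definition hnorm (x : K) : R := sqrt (inner x x).

Definition strong_cv (u : nat -> K) (l : K) : Prop :=
  Un_cv (fun n => hnorm (hsub (u n) l)) 0.
Definition weak_cv (u : nat -> K) (l : K) : Prop :=
  forall z : K, Un_cv (fun n => inner (u n) z) (inner l z).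

Definition is_linear (M : K -> K) : Prop :=
  forall a x y, M (hadd K (hscal K a x) y) = hadd K (hscal K a (M x)) (M y).
Definition is_bounded_linear (M : K -> K) : Prop :=
  is_linear M /\ exists c, forall x, hnorm (M x) <= c * hnorm x.
Definition self_adjoint (M : K -> K) : Prop :=
  forall x y, inner (M x) y = inner x (M y).
Definition P_alpha (alpha : R) (M : K -> K) : Prop :=
  is_bounded_linear M /\ self_adjoint M /\
  forall x, inner (M x) x >= alpha * (hnorm x) ^ 2.
Definition loewner_ge (M1 M2 : K -> K) : Prop :=
  forall x, inner (M1 x) x >= inner (M2 x) x.
Definition is_opnorm (M : K -> K) (c : R) : Prop :=
  is_lub (fun r => exists x, hnorm x <= 1 /\ r = hnorm (M x)) c.
(* inverse of an operator (the preimage chosen by epsilon; for an invertible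
   operator this is its inverse) *)
Definition inv_op (M : K -> K) (x : K) : K :=
  epsilon (inhabits (hzero K)) (fun z => M z = x).
Definition Mnorm (M : K -> K) (x : K) : R := sqrt (inner (M x) x).

Definition monotone (B : K -> K) : Prop :=
  forall x y, inner (hsub (B x) (B y)) (hsub x y) >= 0.
Definition lipschitz (beta : R) (B : K -> K) : Prop :=
  forall x y, hnorm (hsub (B x) (B y)) <= beta * hnorm (hsub x y).
End HS.

Inductive ereal := Fin (r : R) | PInf.
Definition ele (a b : ereal) : Prop :=
  match a, b with
  | Fin x, Fin y => x <= y
  | _, PInf => True
  | PInf, Fin _ => False
  end.
Definition eaddr (r : R) (a : ereal) : ereal :=
  match a with Fin x => Fin (r + x) | PInf => PInf end.
Definition econv (t : R) (a b : ereal) : ereal :=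
  match a, b with Fin x, Fin y => Fin (t * x + (1 - t) * y) | _, _ => PInf end.

Section Fun.
Context {K : HilbertSpace}.
Definition proper (f : K -> ereal) : Prop := exists x, f x <> PInf.
Definition convex (f : K -> ereal) : Prop :=
  forall x y t, 0 < t < 1 ->
    ele (f (hadd K (hscal K t x) (hscal K (1 - t) y))) (econv t (f x) (f y)).
Definition lsc (f : K -> ereal) : Prop :=
  forall (c : R) (u : nat -> K) (l : K),
    (forall n, ele (f (u n)) (Fin c)) -> strong_cv u l -> ele (f l) (Fin c).

Definition VI_solution (f : K -> ereal) (B : K -> K) (xb : K) : Prop :=
  forall y, ele (eaddr (inner (hsub xb y) (B xb)) (f xb)) (f y).
End Fun.

From Stdlib Require Import Reals Lra ClassicalEpsilon Classical Arith Lia.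
Open Scope R_scope.

(* For the algorithm, the metrics W_n = U_n^(-1) decrease up to factors
   (1 + eta_n); dividing by the bounded products of these factors gives
   decreasing metrics V_n.  The optimality condition of the proximal step and
   the monotonicity and Lipschitz continuity of B give Tseng's descent
       ||x_(n+1) - z||_(W_n)^2 <= ||x_n - z||_(W_n)^2 - (eps/mu) ||x_n - p_n||^2
   for every solution z, hence Fejér monotonicity and x_n - p_n -> 0.  Passing
   to the limit in the optimality condition (via Minty's lemma and weak
   closedness of the level sets of f) shows that weak cluster points are
   solutions, and Opial's lemma concludes. *)

(* Bilinearity and symmetry of the inner product, in the form of rewrite rules.
   Together with [vec_ext] they let us prove vector identities by testing them
   against an arbitrary vector ([vec_eq]). *)
Section InnerAlgebra.
Context {K : HilbertSpace}.

Lemma inner_addl (x y z : K) : inner (hadd K x y) z = inner x z + inner y z.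
Proof. apply hinner_add_l. Qed.
Lemma inner_scall a (x y : K) : inner (hscal K a x) y = a * inner x y.
Proof. apply hinner_scal_l. Qed.
Lemma inner_sym (x y : K) : inner x y = inner y x.
Proof. apply hinner_sym. Qed.
Lemma inner_zerol (z : K) : inner (hzero K) z = 0.
Proof.
  assert (H := inner_addl (hzero K) (hzero K) z).
  rewrite hadd_zero in H. lra.
Qed.
Lemma inner_oppl (y z : K) : inner (hopp K y) z = - inner y z.
Proof.
  assert (H := inner_addl y (hopp K y) z).
  rewrite hadd_opp, inner_zerol in H. lra.
Qed.
Lemma inner_subl (x y z : K) : inner (hsub x y) z = inner x z - inner y z.
Proof. unfold hsub. rewrite inner_addl, inner_oppl. ring. Qed.
Lemma inner_addr (x y z : K) : inner z (hadd K x y) = inner z x + inner z y.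
Proof. rewrite !(inner_sym z). apply inner_addl. Qed.
Lemma inner_scalr a (x y : K) : inner y (hscal K a x) = a * inner y x.
Proof. rewrite !(inner_sym y). apply inner_scall. Qed.
Lemma inner_zeror (z : K) : inner z (hzero K) = 0.
Proof. rewrite inner_sym. apply inner_zerol. Qed.
Lemma inner_oppr (y z : K) : inner z (hopp K y) = - inner z y.
Proof. rewrite !(inner_sym z). apply inner_oppl. Qed.
Lemma inner_subr (x y z : K) : inner z (hsub x y) = inner z x - inner z y.
Proof. rewrite !(inner_sym z). apply inner_subl. Qed.

Lemma inner_pos (x : K) : 0 <= inner x x.
Proof. apply hinner_pos. Qed.

Lemma inner_zero_eq (x : K) : inner x x = 0 -> x = hzero K.
Proof. apply hinner_def. Qed.

Lemma vec_ext (x y : K) : (forall z, inner x z = inner y z) -> x = y.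
Proof.
  intros H.
  assert (E : hsub x y = hzero K).
  { apply hinner_def. change (inner (hsub x y) (hsub x y) = 0).
    rewrite inner_subl, H. ring. }
  assert (E2 : hadd K (hsub x y) y = x).
  { unfold hsub. rewrite <- hadd_assoc, (hadd_comm K (hopp K y) y), hadd_opp, hadd_zero.
    reflexivity. }
  rewrite E, hadd_comm, hadd_zero in E2. auto.
Qed.

Lemma sub_zero_eq (x y : K) : hsub x y = hzero K -> x = y.
Proof.
  intros H. apply vec_ext. intro z. assert (E := f_equal (fun v => inner v z) H).
  simpl in E. rewrite inner_subl, inner_zerol in E. lra.
Qed.

End InnerAlgebra.

#[export] Hint Rewrite @inner_addl @inner_scall @inner_zerol @inner_oppl @inner_subl
  @inner_addr @inner_scalr @inner_zeror @inner_oppr @inner_subr : inner.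

Ltac vec_eq := apply vec_ext; intro; autorewrite with inner; ring.

(* A quadratic polynomial t |-> a + 2bt + ct^2 that is nonnegative everywhere
   has nonpositive discriminant; this is the heart of every Cauchy–Schwarz
   inequality below. *)
Lemma quad_discriminant (a b c : R) :
  0 <= c -> (forall t, 0 <= a + 2*b*t + c*t*t) -> b*b <= a*c.
Proof.
  intros Hc H. destruct Hc as [Hc|Hc].
  - specialize (H (-b/c)).
    assert (E: a*c - b*b = c*(a + 2*b*(-b/c) + c*(-b/c)*(-b/c))) by (field; lra).
    nra.
  - subst c. destruct (Req_dec b 0) as [->|Hb]. nra.
    specialize (H (-(a+1)/(2*b))).
    assert (E: a + 2*b*(-(a+1)/(2*b)) + 0*(-(a+1)/(2*b))*(-(a+1)/(2*b)) = -1)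
      by (field; auto).
    lra.
Qed.

Section Norms.
Context {K : HilbertSpace}.

Lemma hnorm_pos (x : K) : 0 <= hnorm x.
Proof. apply sqrt_pos. Qed.
Lemma hnorm_sq (x : K) : hnorm x * hnorm x = inner x x.
Proof. apply sqrt_sqrt, inner_pos. Qed.
Lemma hnorm_pow2 (x : K) : hnorm x ^ 2 = inner x x.
Proof. rewrite <- hnorm_sq. ring. Qed.

Lemma cauchy_schwarz (x y : K) : Rabs (inner x y) <= hnorm x * hnorm y.
Proof.
  assert (Hsq : inner x y * inner x y <= inner x x * inner y y).
  { apply quad_discriminant. apply inner_pos. intro t.
    assert (H := inner_pos (hadd K x (hscal K t y))).
    autorewrite with inner in H. rewrite (inner_sym y x) in H. nra. }
  rewrite <- !hnorm_sq in Hsq. assert (H1 := hnorm_pos x). assert (H2 := hnorm_pos y).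
  apply Rsqr_incr_0_var. 2: nra.
  unfold Rsqr. rewrite <- Rabs_mult, Rabs_right by nra. nra.
Qed.

Lemma cauchy_schwarz_le (x y : K) : inner x y <= hnorm x * hnorm y.
Proof. eapply Rle_trans; [apply Rle_abs | apply cauchy_schwarz]. Qed.

Lemma norm_triangle (x y : K) : hnorm (hadd K x y) <= hnorm x + hnorm y.
Proof.
  assert (H1 := hnorm_pos x). assert (H2 := hnorm_pos y).
  apply Rsqr_incr_0_var. 2: lra. unfold Rsqr.
  rewrite hnorm_sq. autorewrite with inner. rewrite (inner_sym y x).
  assert (H := cauchy_schwarz_le x y). rewrite <- (hnorm_sq x), <- (hnorm_sq y). nra.
Qed.

Lemma norm_triangle_sub (x y z : K) :
  hnorm (hsub x z) <= hnorm (hsub x y) + hnorm (hsub y z).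
Proof.
  replace (hsub x z) with (hadd K (hsub x y) (hsub y z)) by vec_eq. apply norm_triangle.
Qed.

Lemma hnorm_scal a (x : K) : hnorm (hscal K a x) = Rabs a * hnorm x.
Proof.
  unfold hnorm. rewrite inner_scall, inner_scalr, <- Rmult_assoc, sqrt_mult_alt by nra.
  f_equal. apply sqrt_Rsqr_abs.
Qed.

Lemma hnorm_sub_sym (x y : K) : hnorm (hsub x y) = hnorm (hsub y x).
Proof.
  replace (hsub x y) with (hscal K (-1) (hsub y x)) by vec_eq.
  rewrite hnorm_scal. rewrite Rabs_left by lra. ring.
Qed.

Lemma hnorm_zero : hnorm (hzero K) = 0.
Proof. unfold hnorm. rewrite inner_zerol. apply sqrt_0. Qed.

Lemma hnorm_zero_eq (x : K) : hnorm x = 0 -> x = hzero K.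
Proof. intros H. apply inner_zero_eq. rewrite <- hnorm_sq, H. ring. Qed.

Lemma norm_le_sqrt (v : K) M : inner v v <= M -> hnorm v <= sqrt M.
Proof. intros H. unfold hnorm. apply sqrt_le_1_alt. auto. Qed.

End Norms.

Section Linear.
Context {K : HilbertSpace} (M : K -> K) (HM : is_linear M).

Lemma lin_zero : M (hzero K) = hzero K.
Proof.
  assert (H := HM 1 (hzero K) (hzero K)).
  replace (hadd K (hscal K 1 (hzero K)) (hzero K)) with (hzero K) in H by vec_eq.
  apply vec_ext. intro z. assert (E := f_equal (fun v => inner v z) H). simpl in E.
  autorewrite with inner in E |- *. lra.
Qed.
Lemma lin_add x y : M (hadd K x y) = hadd K (M x) (M y).
Proof. assert (H := HM 1 x y). rewrite !hscal_one in H. auto. Qed.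
Lemma lin_scal a x : M (hscal K a x) = hscal K a (M x).
Proof. assert (H := HM a x (hzero K)). rewrite !hadd_zero, lin_zero, hadd_zero in H. auto. Qed.
Lemma lin_sub x y : M (hsub x y) = hsub (M x) (M y).
Proof.
  replace (hsub x y) with (hadd K x (hscal K (-1) y)) by vec_eq.
  rewrite lin_add, lin_scal. vec_eq.
Qed.

Lemma positive_cauchy_schwarz : self_adjoint M -> (forall x, 0 <= inner (M x) x) ->
  forall x y, inner (M x) y * inner (M x) y <= inner (M x) x * inner (M y) y.
Proof.
  intros HS HP x y. apply quad_discriminant. apply HP. intro t.
  assert (H := HP (hadd K x (hscal K t y))).
  rewrite lin_add, lin_scal in H. autorewrite with inner in H.
  rewrite (HS y x), (inner_sym y (M x)) in H. nra.
Qed.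

End Linear.

Lemma choice_nat {T : Type} (P : nat -> T -> Prop) :
  (forall n, exists x, P n x) -> exists f : nat -> T, forall n, P n (f n).
Proof.
  intros H. exists (fun n => proj1_sig (constructive_indefinite_description _ (H n))).
  intro n. exact (proj2_sig (constructive_indefinite_description _ (H n))).
Qed.

Lemma Rabs_le_between (a b : R) : Rabs a <= b -> - b <= a <= b.
Proof.
  intros H. assert (H1 := Rle_abs a). assert (H2 := Rle_abs (- a)).
  rewrite Rabs_Ropp in H2. lra.
Qed.

Lemma cv_const c : Un_cv (fun _ => c) c.
Proof. intros e He. exists 0%nat. intros. unfold R_dist. rewrite Rminus_diag, Rabs_R0. lra. Qed.

Lemma cv_ext (a b : nat -> R) l : (forall n, a n = b n) -> Un_cv a l -> Un_cv b l.
Proof. intros E H e He. destruct (H e He) as [N HN]. exists N. intros. rewrite <- E. auto. Qed.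

Lemma cv_eventually_ext (a b : nat -> R) N l :
  (forall n, (n >= N)%nat -> a n = b n) -> Un_cv a l -> Un_cv b l.
Proof.
  intros E H e He. destruct (H e He) as [M HM]. exists (max N M). intros n Hn.
  rewrite <- E by lia. apply HM. lia.
Qed.

(* Any reindexing with [k <= rho k] (in particular a subsequence) preserves limits. *)
Lemma cv_subseq (rho : nat -> nat) (a : nat -> R) l :
  (forall k, (k <= rho k)%nat) -> Un_cv a l -> Un_cv (fun k => a (rho k)) l.
Proof.
  intros Hr H e He. destruct (H e He) as [N HN]. exists N. intros n Hn. apply HN.
  specialize (Hr n). lia.
Qed.

Lemma cv_scale (c : R) (a : nat -> R) l : Un_cv a l -> Un_cv (fun n => c * a n) (c * l).
Proof. intros H. apply (CV_mult (fun _ => c)). apply cv_const. exact H. Qed.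

Lemma cv_le_const (a : nat -> R) la b : (forall n, a n <= b) -> Un_cv a la -> la <= b.
Proof. intros. eapply Rle_cv_lim with (Vn := fun _ => b); eauto. apply cv_const. Qed.

Lemma cv_ge_const (a : nat -> R) la b : (forall n, b <= a n) -> Un_cv a la -> b <= la.
Proof. intros. eapply Rle_cv_lim with (Un := fun _ => b); eauto. apply cv_const. Qed.

Lemma cv_of_cv_sub (a : nat -> R) l : Un_cv (fun n => a n - l) 0 -> Un_cv a l.
Proof.
  intros H e He. destruct (H e He) as [N HN]. exists N. intros n Hn. specialize (HN n Hn).
  unfold R_dist in *. rewrite Rminus_0_r in HN. auto.
Qed.

Lemma sqrt_lt_of_sq (a e : R) : 0 <= a -> 0 < e -> a < e * e -> sqrt a < e.
Proof. intros Ha He H. rewrite <- (sqrt_square e) by lra. apply sqrt_lt_1; nra. Qed.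

Lemma squeeze_zero (c d : nat -> R) : (forall n, Rabs (c n) <= d n) -> Un_cv d 0 -> Un_cv c 0.
Proof.
  intros H Hd e He. destruct (Hd e He) as [N HN]. exists N. intros n Hn.
  specialize (HN n Hn). specialize (H n). unfold R_dist in *. rewrite Rminus_0_r in *.
  assert (0 <= d n) by (eapply Rle_trans; [apply Rabs_pos| eauto]).
  rewrite Rabs_right in HN by lra. lra.
Qed.

Lemma inv_succ_small (e : R) : 0 < e -> exists N, forall n, (n >= N)%nat -> / (INR n + 1) < e.
Proof.
  intros He. destruct (archimed_cor1 e He) as [N [HN HN0]]. exists N. intros n Hn.
  eapply Rle_lt_trans; [|apply HN]. apply Rinv_le_contravar. apply lt_0_INR. lia.
  apply le_INR in Hn. lra.
Qed.

Lemma cv_inv_succ : Un_cv (fun n => / (INR n + 1)) 0.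
Proof.
  intros e He. destruct (inv_succ_small e He) as [N HN]. exists N. intros n Hn.
  unfold R_dist. rewrite Rminus_0_r. rewrite Rabs_right. auto.
  left. apply Rinv_0_lt_compat. assert (H:= pos_INR n). lra.
Qed.

(* If a <= t c for all small t > 0, then a <= 0: the limiting step of every
   first-order optimality argument. *)
Lemma le_of_le_small (a c : R) : (forall t, 0 < t < 1 -> a <= t * c) -> a <= 0.
Proof.
  intros H. destruct (Rle_dec a 0) as [|Ha]. auto. exfalso.
  destruct (Rle_dec c 0) as [Hc|Hc].
  - specialize (H (1/2) ltac:(lra)). lra.
  - set (t := Rmin (1/2) (a / (2*c))).
    assert (Ht1 : t <= a / (2*c)) by apply Rmin_r.
    assert (Ht0 : 0 < t). { unfold t. apply Rmin_glb_lt. lra. apply Rdiv_lt_0_compat; lra. }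
    assert (Ht2 : t <= 1/2) by apply Rmin_l.
    specialize (H t ltac:(lra)).
    assert (t * c <= a / 2).
    { apply Rmult_le_compat_r with (r := c) in Ht1; [|lra].
      replace (a / (2*c) * c) with (a/2) in Ht1 by (field; lra). lra. }
    lra.
Qed.

Lemma bolzano_subseq (a : nat -> R) C : (forall n, Rabs (a n) <= C) ->
  exists psi l, (forall k, (k <= psi k)%nat) /\ Un_cv (fun k => a (psi k)) l.
Proof.
  intros H.
  destruct (Bolzano_Weierstrass a (fun c => -C <= c <= C) (compact_P3 (-C) C)) as [l Hl].
  { intro n. apply Rabs_le_between. auto. }
  assert (Hex : forall k : nat, exists p, (k <= p)%nat /\ Rabs (a p - l) < / (INR k + 1)).
  { intro k.
    assert (Hpos : 0 < / (INR k + 1)) by (apply Rinv_0_lt_compat; assert (H1:=pos_INR k); lra).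
    destruct (Hl (disc l (mkposreal _ Hpos)) k) as [p [Hp Hv]].
    { exists (mkposreal _ Hpos). intros y Hy. auto. }
    exists p. split; auto. }
  destruct (choice_nat _ Hex) as [psi Hpsi]. exists psi, l. split. intro k. apply (Hpsi k).
  intros e He. destruct (inv_succ_small e He) as [N HN]. exists N. intros n Hn. unfold R_dist.
  eapply Rlt_trans. apply (Hpsi n). apply HN; auto.
Qed.

Section Convergence.
Context {K : HilbertSpace}.

Lemma strong_cv_iff (u : nat -> K) l : strong_cv u l <->
  forall e, e > 0 -> exists N, forall n, (n >= N)%nat -> hnorm (hsub (u n) l) < e.
Proof.
  unfold strong_cv, Un_cv, R_dist. split; intros H e He; destruct (H e He) as [N HN];
  exists N; intros n Hn; specialize (HN n Hn); rewrite Rminus_0_r in *;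
  rewrite Rabs_right in * by (apply Rle_ge, hnorm_pos); auto.
Qed.

Lemma strong_weak (u : nat -> K) l : strong_cv u l -> weak_cv u l.
Proof.
  intros H z. apply cv_of_cv_sub.
  apply squeeze_zero with (d := fun n => hnorm (hsub (u n) l) * hnorm z).
  - intro n. rewrite <- inner_subl. rewrite inner_sym, Rmult_comm. apply cauchy_schwarz.
  - replace 0 with (0 * hnorm z) by ring. apply (CV_mult _ (fun _ => hnorm z)).
    apply H. apply cv_const.
Qed.

Lemma weak_unique (u : nat -> K) l1 l2 : weak_cv u l1 -> weak_cv u l2 -> l1 = l2.
Proof. intros H1 H2. apply vec_ext. intro z. eapply UL_sequence; eauto. Qed.

Lemma cauchy_strong_cv (u : nat -> K) :
  (forall e, e > 0 -> exists N, forall m n, (m >= N)%nat -> (n >= N)%nat ->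
     hnorm (hsub (u m) (u n)) < e) -> exists l, strong_cv u l.
Proof.
  intros H. destruct (hcomplete K u H) as [l Hl]. exists l.
  apply strong_cv_iff. intros e He. destruct (Hl e He) as [N HN]. exists N. auto.
Qed.

Lemma strong_unique (u : nat -> K) l1 l2 : strong_cv u l1 -> strong_cv u l2 -> l1 = l2.
Proof. intros. eapply weak_unique; apply strong_weak; eauto. Qed.

Lemma weak_subseq (rho : nat -> nat) (u : nat -> K) l :
  (forall k, (k <= rho k)%nat) -> weak_cv u l -> weak_cv (fun k => u (rho k)) l.
Proof. intros Hr H z. apply (cv_subseq rho (fun n => inner (u n) z)); auto. Qed.

Lemma weak_cv_ext (u v : nat -> K) l : (forall k, u k = v k) -> weak_cv u l -> weak_cv v l.
Proof. intros E H z. apply (cv_ext (fun k => inner (u k) z)). intro. rewrite E. auto. apply H. Qed.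

Lemma weak_cv_perturb (u v : nat -> K) l :
  weak_cv u l -> Un_cv (fun n => hnorm (v n)) 0 -> weak_cv (fun n => hadd K (u n) (v n)) l.
Proof.
  intros Hu Hv z. replace (inner l z) with (inner l z + 0) by ring.
  apply (cv_ext (fun n => inner (u n) z + inner (v n) z)). intro. autorewrite with inner. auto.
  apply CV_plus. apply Hu. apply squeeze_zero with (d := fun n => hnorm (v n) * hnorm z).
  intro. apply cauchy_schwarz. replace 0 with (0 * hnorm z) by ring.
  apply (CV_mult _ (fun _ => hnorm z)). auto. apply cv_const.
Qed.

Lemma bounded_inner (u : nat -> K) C z : (forall n, hnorm (u n) <= C) ->
  forall n, Rabs (inner (u n) z) <= C * hnorm z.
Proof.
  intros H n. eapply Rle_trans. apply cauchy_schwarz.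
  apply Rmult_le_compat_r. apply hnorm_pos. auto.
Qed.

End Convergence.

Section Projection.
Context {K : HilbertSpace}.

Definition convex_set (C : K -> Prop) : Prop := forall a b t, 0 <= t <= 1 -> C a -> C b ->
  C (hadd K (hscal K t a) (hscal K (1 - t) b)).
Definition closed_set (C : K -> Prop) : Prop :=
  forall u l, (forall n : nat, C (u n)) -> strong_cv u l -> C l.

Lemma sq_dist_cv (u : nat -> K) l x : strong_cv u l ->
  Un_cv (fun n => inner (hsub x (u n)) (hsub x (u n))) (inner (hsub x l) (hsub x l)).
Proof.
  intros H. apply cv_of_cv_sub.
  apply (cv_ext (fun n => inner (hsub l (u n)) (hadd K (hsub x (u n)) (hsub x l)))).
  { intro n. autorewrite with inner.
    rewrite (inner_sym (u n) x), (inner_sym (u n) l), (inner_sym l x). ring. }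
  apply squeeze_zero with
    (d := fun n => hnorm (hsub (u n) l) * (hnorm (hsub (u n) l) + 2 * hnorm (hsub x l))).
  - intro n. eapply Rle_trans. apply cauchy_schwarz. rewrite hnorm_sub_sym.
    apply Rmult_le_compat_l. apply hnorm_pos.
    replace (hadd K (hsub x (u n)) (hsub x l))
      with (hadd K (hsub l (u n)) (hscal K 2 (hsub x l))) by vec_eq.
    eapply Rle_trans. apply norm_triangle.
    rewrite hnorm_scal, hnorm_sub_sym, Rabs_right by lra. lra.
  - replace 0 with (0 * (0 + 2 * hnorm (hsub x l))) by ring. apply CV_mult. apply H.
    apply CV_plus. apply H. apply cv_const.
Qed.

(* Parallelogram law: two near-minimizers of the distance to x over a convex
   set are close to each other, since their midpoint is also in the set. *)
Lemma near_minimizers_close (C : K -> Prop) (x a b : K) (d2 ea eb : R) : convex_set C ->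
  (forall w, C w -> d2 <= inner (hsub x w) (hsub x w)) -> C a -> C b ->
  inner (hsub x a) (hsub x a) < d2 + ea -> inner (hsub x b) (hsub x b) < d2 + eb ->
  inner (hsub a b) (hsub a b) <= 2 * ea + 2 * eb.
Proof.
  intros Hcv Hinf Ca Cb Ha Hb.
  set (mid := hadd K (hscal K (1/2) a) (hscal K (1 - 1/2) b)).
  assert (Hd := Hinf mid ltac:(apply Hcv; auto; lra)).
  assert (Parallelogram : inner (hsub a b) (hsub a b) =
     2 * inner (hsub x a) (hsub x a) + 2 * inner (hsub x b) (hsub x b)
     - 4 * inner (hsub x mid) (hsub x mid)).
  { unfold mid. autorewrite with inner. rewrite (inner_sym b a), (inner_sym a x), (inner_sym b x).
    field. }
  lra.
Qed.

(* A nonempty closed convex set contains a point nearest to any given point: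
   a minimizing sequence is Cauchy by [near_minimizers_close]. *)
Lemma nearest_point_exists (C : K -> Prop) (x0 : K) : C x0 -> convex_set C -> closed_set C ->
  forall x, exists p, C p /\ forall w, C w -> inner (hsub x p) (hsub x p) <= inner (hsub x w) (hsub x w).
Proof.
  intros H0 Hcv Hcl x.
  set (E := fun r => exists w, C w /\ r = - inner (hsub x w) (hsub x w)).
  destruct (completeness E) as [m [Hub Hlub]].
  { exists 0. intros r [w [_ ->]]. assert (H := inner_pos (hsub x w)). lra. }
  { exists (- inner (hsub x x0) (hsub x x0)). exists x0. auto. }
  assert (Hinf : forall w, C w -> - m <= inner (hsub x w) (hsub x w)).
  { intros w Hw. assert (H := Hub _ (ex_intro _ w (conj Hw eq_refl))). lra. }
  assert (Happ : forall n : nat, exists w, C w /\ inner (hsub x w) (hsub x w) < - m + / (INR n + 1)).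
  { intro n. apply NNPP. intro Hn.
    assert (Hb : is_upper_bound E (m - / (INR n + 1))).
    { intros r [w [Hw ->]]. apply Rnot_lt_le. intro Hlt. apply Hn. exists w. split; auto. lra. }
    specialize (Hlub _ Hb). assert (0 < / (INR n + 1)).
    { apply Rinv_0_lt_compat. assert (H:=pos_INR n). lra. }
    lra. }
  destruct (choice_nat _ Happ) as [w Hw].
  destruct (cauchy_strong_cv w) as [l Hsl].
  { intros e He. destruct (inv_succ_small (e * e / 4)) as [N HN]. apply Rdiv_lt_0_compat; nra.
    exists N. intros n k Hn Hk. apply sqrt_lt_of_sq. apply inner_pos. auto.
    assert (H1 := HN n Hn). assert (H2 := HN k Hk).
    assert (Hnk := near_minimizers_close C x (w n) (w k) _ _ _ Hcv Hinf
                     (proj1 (Hw n)) (proj1 (Hw k)) (proj2 (Hw n)) (proj2 (Hw k))).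
    lra. }
  exists l. split. { eapply Hcl; [intro n; apply (Hw n) | exact Hsl]. }
  intros z Hz. apply Rle_trans with (- m); [|apply Hinf; auto].
  apply Rle_cv_lim with (Un := fun n => inner (hsub x (w n)) (hsub x (w n)))
    (Vn := fun n => - m + / (INR n + 1)).
  - intro n. left. apply (Hw n).
  - apply sq_dist_cv. auto.
  - pose proof (CV_plus _ _ _ _ (cv_const (- m)) cv_inv_succ) as Hb.
    rewrite Rplus_0_r in Hb. exact Hb.
Qed.

Lemma nearest_point_obtuse (C : K -> Prop) (x p : K) : convex_set C -> C p ->
  (forall w, C w -> inner (hsub x p) (hsub x p) <= inner (hsub x w) (hsub x w)) ->
  forall w, C w -> inner (hsub x p) (hsub w p) <= 0.
Proof.
  intros Hcv Cp Hmin z Hz.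
  apply le_of_le_small with (c := inner (hsub z p) (hsub z p) / 2). intros t Ht.
  assert (H1 := Hmin (hadd K (hscal K t z) (hscal K (1 - t) p)) ltac:(apply Hcv; auto; lra)).
  assert (E1 : inner (hsub x (hadd K (hscal K t z) (hscal K (1 - t) p)))
                     (hsub x (hadd K (hscal K t z) (hscal K (1 - t) p)))
     = inner (hsub x p) (hsub x p) - 2 * t * inner (hsub x p) (hsub z p)
       + t * t * inner (hsub z p) (hsub z p)).
  { autorewrite with inner. rewrite (inner_sym z x), (inner_sym p x), (inner_sym p z). ring. }
  rewrite E1 in H1. nra.
Qed.

Theorem projection (C : K -> Prop) (x0 : K) : C x0 -> convex_set C -> closed_set C ->
  forall x, exists p, C p /\ forall w, C w -> inner (hsub x p) (hsub w p) <= 0.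
Proof.
  intros H0 Hcv Hcl x. destruct (nearest_point_exists C x0 H0 Hcv Hcl x) as [p [Cp Hp]].
  exists p. split. auto. apply nearest_point_obtuse; auto.
Qed.

Definition subspace (C : K -> Prop) : Prop :=
  C (hzero K) /\ (forall a b, C a -> C b -> C (hadd K a b)) /\ (forall t a, C a -> C (hscal K t a)).

Lemma subspace_convex C : subspace C -> convex_set C.
Proof. intros [H0 [Ha Hs]] a b t Ht Ca Cb. apply Ha; apply Hs; auto. Qed.

Lemma orthogonal_projection (C : K -> Prop) : subspace C -> closed_set C ->
  forall x, exists p, C p /\ forall w, C w -> inner (hsub x p) w = 0.
Proof.
  intros HS Hcl x.
  destruct (projection C (hzero K) (proj1 HS) (subspace_convex C HS) Hcl x) as [p [Cp Hp]].
  exists p. split. auto. intros w Cw. destruct HS as [H0 [Ha Hs]].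
  assert (H1 := Hp (hadd K p w) (Ha _ _ Cp Cw)).
  assert (H2 := Hp (hadd K p (hscal K (-1) w)) (Ha _ _ Cp (Hs _ _ Cw))).
  replace (hsub (hadd K p w) p) with w in H1 by vec_eq.
  replace (hsub (hadd K p (hscal K (-1) w)) p) with (hscal K (-1) w) in H2 by vec_eq.
  rewrite inner_scalr in H2. lra.
Qed.

Lemma weak_closed (C : K -> Prop) (x0 : K) : C x0 -> convex_set C -> closed_set C ->
  forall u l, (forall n : nat, C (u n)) -> weak_cv u l -> C l.
Proof.
  intros H0 Hcv Hcl u l Hu Hw.
  destruct (projection C x0 H0 Hcv Hcl l) as [p [Cp Hp]].
  assert (Hle : inner (hsub l p) (hsub l p) <= 0).
  { apply cv_le_const with (a := fun n => inner (u n) (hsub l p) - inner p (hsub l p)).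
    intro n. rewrite <- inner_subl, inner_sym. apply Hp. auto.
    rewrite inner_subl. apply CV_minus. apply Hw. apply cv_const. }
  assert (E : hsub l p = hzero K) by (apply inner_zero_eq; assert (H:=inner_pos (hsub l p)); lra).
  apply sub_zero_eq in E. subst. auto.
Qed.

Lemma riesz (L : K -> R) c : (forall a x y, L (hadd K (hscal K a x) y) = a * L x + L y) ->
  (forall x, Rabs (L x) <= c * hnorm x) -> exists v, forall z, L z = inner v z.
Proof.
  intros HL Hb.
  assert (L0 : L (hzero K) = 0).
  { assert (H := HL 1 (hzero K) (hzero K)).
    replace (hadd K (hscal K 1 (hzero K)) (hzero K)) with (hzero K) in H by vec_eq. lra. }
  assert (Lscal : forall a x, L (hscal K a x) = a * L x).
  { intros. rewrite <- (hadd_zero K (hscal K a x)). rewrite HL, L0. ring. }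
  assert (Lsub : forall x y, L (hsub x y) = L x - L y).
  { intros. replace (hsub x y) with (hadd K (hscal K (-1) y) x) by vec_eq. rewrite HL. ring. }
  destruct (classic (forall z, L z = 0)) as [Hz|Hnz].
  { exists (hzero K). intro z. rewrite Hz, inner_zerol. auto. }
  apply not_all_ex_not in Hnz. destruct Hnz as [z0 Hz0].
  set (Ker := fun z => L z = 0).
  assert (HS : subspace Ker).
  { unfold Ker. split; [|split]. auto.
    - intros a b Ha Hb'. rewrite <- (hscal_one K a), HL, Ha, Hb'. ring.
    - intros t a Ha. rewrite Lscal, Ha. ring. }
  assert (Hcl : closed_set Ker).
  { intros u l Hu Hl. unfold Ker in *.
    assert (Hle : Rabs (L l) <= c * 0).
    { apply cv_ge_const with (a := fun n => c * hnorm (hsub (u n) l)).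
      intro n. replace (L l) with (- L (hsub (u n) l)) by (rewrite Lsub, Hu; ring).
      rewrite Rabs_Ropp. apply Hb. apply cv_scale. apply Hl. }
    apply Rabs_le_between in Hle. lra. }
  destruct (orthogonal_projection Ker HS Hcl z0) as [p [Np Hp]].
  set (w := hsub z0 p).
  assert (Lw : L w <> 0). { unfold w. rewrite Lsub. unfold Ker in Np. rewrite Np. lra. }
  assert (ww : inner w w <> 0). { intro E. apply inner_zero_eq in E. rewrite E in Lw. auto. }
  exists (hscal K (L w / inner w w) w). intro z.
  assert (Nz : Ker (hsub z (hscal K (L z / L w) w))).
  { unfold Ker. rewrite Lsub, Lscal. field. auto. }
  assert (H := Hp _ Nz). fold w in H. autorewrite with inner in H |- *.
  replace (inner w z) with (L z / L w * inner w w) by lra. field. auto.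
Qed.

End Projection.

(* By Bolzano–Weierstrass
   and a diagonal argument, some subsequence (u_(phi k)) has convergent inner
   products against every u_m; these limits extend to all z by orthogonal
   projection onto the closed subspace where they exist, and Riesz
   representation produces the weak limit. *)

Definition bw_reindex_spec (a : nat -> R) (psi : nat -> nat) : Prop :=
  (forall k, (k <= psi k)%nat) /\
  ((exists C, forall n, Rabs (a n) <= C) -> exists l, Un_cv (fun k => a (psi k)) l).

Definition bw_reindex (a : nat -> R) : nat -> nat :=
  epsilon (inhabits (fun k : nat => k)) (bw_reindex_spec a).

Lemma bw_reindex_ok a : bw_reindex_spec a (bw_reindex a).
Proof.
  unfold bw_reindex. apply epsilon_spec.
  destruct (classic (exists C, forall n, Rabs (a n) <= C)) as [[C HC]|Hn].
  - destruct (bolzano_subseq a C HC) as [psi [l [H1 H2]]]. exists psi. split; auto.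
    intros _. eauto.
  - exists (fun k => k). split. auto. intros H. contradiction.
Qed.

Section WeakCompactness.
Context {K : HilbertSpace} (u : nat -> K) (C : R) (Hu : forall n, hnorm (u n) <= C).

(* [nested m] refines [nested (m-1)] so that <u_(nested m k), u_m> converges. *)
Fixpoint nested (m : nat) : nat -> nat :=
  match m with
  | O => bw_reindex (fun k => inner (u k) (u O))
  | S m' => fun j => nested m' (bw_reindex (fun k => inner (u (nested m' k)) (u (S m'))) j)
  end.

Lemma nested_ge m j : (j <= nested m j)%nat.
Proof.
  revert j; induction m; intro j; simpl.
  - apply (proj1 (bw_reindex_ok _)).
  - eapply Nat.le_trans;
      [apply (proj1 (bw_reindex_ok (fun k => inner (u (nested m k)) (u (S m))))) | apply IHm].
Qed.

Lemma nested_cv m : exists l, Un_cv (fun k => inner (u (nested m k)) (u m)) l.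
Proof.
  assert (Hbd : forall (g : nat -> nat) z, exists C', forall n, Rabs (inner (u (g n)) z) <= C').
  { intros g z. exists (C * hnorm z). intro n. apply (bounded_inner (fun n => u (g n))). auto. }
  destruct m; simpl.
  - apply (proj2 (bw_reindex_ok (fun k => inner (u k) (u O)))). apply (Hbd (fun k => k)).
  - apply (proj2 (bw_reindex_ok (fun k => inner (u (nested m k)) (u (S m))))). apply Hbd.
Qed.

Lemma nested_refines m d j : exists j', (j <= j')%nat /\ nested (m + d) j = nested m j'.
Proof.
  revert j; induction d; intro j.
  - exists j. rewrite Nat.add_0_r. auto.
  - rewrite Nat.add_succ_r. simpl.
    set (r := bw_reindex (fun k => inner (u (nested (m + d) k)) (u (S (m + d))))).
    destruct (IHd (r j)) as [j' [H1 H2]]. exists j'. split; auto.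
    eapply Nat.le_trans; [|exact H1].
    apply (proj1 (bw_reindex_ok (fun k => inner (u (nested (m + d) k)) (u (S (m + d)))))).
Qed.

Definition diagonal (k : nat) : nat := nested k k.

Lemma diagonal_ge k : (k <= diagonal k)%nat.
Proof. apply nested_ge. Qed.

Lemma diagonal_cv_terms m : exists l, Un_cv (fun k => inner (u (diagonal k)) (u m)) l.
Proof.
  assert (Htheta : forall k, exists j, (k <= j)%nat /\ ((m <= k)%nat -> diagonal k = nested m j)).
  { intro k. destruct (le_lt_dec m k) as [Hmk|Hmk].
    - destruct (nested_refines m (k - m) k) as [j [H1 H2]]. exists j. split; auto.
      intros _. unfold diagonal. replace k with (m + (k - m))%nat at 1 by lia. auto.
    - exists k. split. auto. intros. lia. }
  destruct (choice_nat _ Htheta) as [theta Htheta'].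
  destruct (nested_cv m) as [l Hl]. exists l.
  apply cv_eventually_ext with (a := fun k => inner (u (nested m (theta k))) (u m)) (N := m).
  - intros n Hn. rewrite (proj2 (Htheta' n)); auto.
  - apply (cv_subseq theta (fun j => inner (u (nested m j)) (u m))). intro k. apply (Htheta' k). auto.
Qed.

Definition diagonal_limit_set (z : K) : Prop :=
  exists l, Un_cv (fun k => inner (u (diagonal k)) z) l.

Lemma diagonal_limit_subspace : subspace diagonal_limit_set.
Proof.
  split; [|split].
  - exists 0. apply (cv_ext (fun _ => 0)). intro. rewrite inner_zeror. auto. apply cv_const.
  - intros a b [la Ha] [lb Hb]. exists (la + lb).
    apply (cv_ext (fun k => inner (u (diagonal k)) a + inner (u (diagonal k)) b)).
    intro. rewrite inner_addr. auto. apply CV_plus; auto.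
  - intros t a [la Ha]. exists (t * la).
    apply (cv_ext (fun k => t * inner (u (diagonal k)) a)).
    intro. rewrite inner_scalr. auto. apply cv_scale. auto.
Qed.

(* Closedness: an approximating w_J makes the sequence <u_(diagonal k), z> Cauchy. *)
Lemma diagonal_limit_closed : closed_set diagonal_limit_set.
Proof.
  intros w z Hw Hz. destruct (R_complete (fun k => inner (u (diagonal k)) z)) as [l Hl].
  2:{ exists l. auto. }
  assert (HC : 0 <= C) by (eapply Rle_trans; [apply (hnorm_pos (u 0%nat)) | apply (Hu 0%nat)]).
  intros e He. rewrite strong_cv_iff in Hz.
  destruct (Hz (e / (4 * (C + 1)))) as [J HJ]. { apply Rdiv_lt_0_compat; lra. }
  destruct (Hw J) as [lJ HlJ]. destruct (CV_Cauchy _ (exist _ lJ HlJ) (e/2)) as [N HN]. lra.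
  exists N. intros n m Hn Hm. specialize (HN n m Hn Hm). unfold R_dist in *.
  assert (Hsmall : C * (e / (4 * (C + 1))) <= e / 4).
  { unfold Rdiv. rewrite Rinv_mult.
    assert (0 < / (C + 1)) by (apply Rinv_0_lt_compat; lra).
    assert (C * / (C+1) <= 1). { apply (Rmult_le_reg_r (C+1)). lra. field_simplify; lra. }
    nra. }
  assert (Happrox : forall i, Rabs (inner (u (diagonal i)) (hsub z (w J))) <= e / 4).
  { intro i. eapply Rle_trans; [|exact Hsmall]. eapply Rle_trans. apply cauchy_schwarz.
    rewrite hnorm_sub_sym. apply Rmult_le_compat. apply hnorm_pos. apply hnorm_pos.
    apply Hu. left. apply HJ. lia. }
  assert (B1 := Happrox n). assert (B2 := Happrox m). rewrite inner_subr in B1, B2.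
  replace (inner (u (diagonal n)) z - inner (u (diagonal m)) z) with
    ((inner (u (diagonal n)) z - inner (u (diagonal n)) (w J))
     - (inner (u (diagonal m)) z - inner (u (diagonal m)) (w J))
     + (inner (u (diagonal n)) (w J) - inner (u (diagonal m)) (w J))) by ring.
  eapply Rle_lt_trans. apply Rabs_triang. eapply Rle_lt_trans.
  apply Rplus_le_compat_r. apply Rabs_triang. rewrite Rabs_Ropp. lra.
Qed.

(* Every z decomposes as (element of the set) + (vector orthogonal to all u_m),
   so the limits exist for all z. *)
Lemma diagonal_limit_all z : diagonal_limit_set z.
Proof.
  destruct (orthogonal_projection diagonal_limit_set diagonal_limit_subspace
              diagonal_limit_closed z) as [p [[lp Hp] Horth]].
  exists lp. apply (cv_ext (fun k => inner (u (diagonal k)) p)). 2: auto.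
  intro k. replace z with (hadd K p (hsub z p)) by vec_eq. rewrite inner_addr.
  rewrite (inner_sym _ (hsub z p)), Horth by apply diagonal_cv_terms. ring.
Qed.

Theorem weak_compact : exists rho l, (forall k, (k <= rho k)%nat) /\ weak_cv (fun k => u (rho k)) l.
Proof.
  set (L := fun z => epsilon (inhabits 0) (fun l => Un_cv (fun k => inner (u (diagonal k)) z) l)).
  assert (HL : forall z, Un_cv (fun k => inner (u (diagonal k)) z) (L z)).
  { intro z. unfold L. apply epsilon_spec. apply diagonal_limit_all. }
  destruct (riesz L C) as [v Hv].
  - intros a x y. eapply UL_sequence. apply HL.
    apply (cv_ext (fun k => a * inner (u (diagonal k)) x + inner (u (diagonal k)) y)).
    intro. autorewrite with inner. auto. apply CV_plus. apply cv_scale. auto. auto.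
  - intro x. apply Rabs_le.
    assert (Hb := fun n => Rabs_le_between _ _ (bounded_inner u C x Hu (diagonal n))).
    split; [apply cv_ge_const with (a := fun k => inner (u (diagonal k)) x)
           |apply cv_le_const with (a := fun k => inner (u (diagonal k)) x)];
    try apply HL; intro n; specialize (Hb n); lra.
  - exists diagonal, v. split. apply diagonal_ge. intro z. rewrite <- Hv. apply HL.
Qed.

End WeakCompactness.

Lemma weak_cv_of_unique_cluster {K : HilbertSpace} (u : nat -> K) (C : R) (l : K) :
  (forall n, hnorm (u n) <= C) ->
  (forall rho l', (forall k, (k <= rho k)%nat) -> weak_cv (fun k => u (rho k)) l' -> l' = l) ->
  weak_cv u l.
Proof.
  intros Hb Huniq z. apply NNPP. intro Hn.
  assert (Hfar : exists e, e > 0 /\ forall N, exists n, (N <= n)%nat /\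
                   R_dist (inner (u n) z) (inner l z) >= e).
  { apply NNPP. intro Hne. apply Hn. intros e He. apply NNPP. intro HN. apply Hne.
    exists e. split. auto. intro N. apply NNPP. intro HN2. apply HN. exists N.
    intros n Hnn. apply Rnot_ge_lt. intro Hge. apply HN2. exists n. split. lia. auto. }
  destruct Hfar as [e [He Hs]]. destruct (choice_nat _ Hs) as [sigma Hsigma].
  destruct (weak_compact (fun k => u (sigma k)) C (fun n => Hb (sigma n)))
    as [phi [l' [Hphi Hw]]].
  assert (E : l' = l).
  { apply (Huniq (fun k => sigma (phi k))). 2: exact Hw.
    intro k. specialize (Hphi k). specialize (Hsigma (phi k)). lia. }
  subst l'. destruct (Hw z e He) as [N HN]. specialize (HN N (le_n _)).
  specialize (Hsigma (phi N)). lra.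
Qed.

Section StronglyPositive.
Context {K : HilbertSpace} (U : K -> K) (alpha mu : R).
Hypotheses (Hlin : is_linear U) (Hco : forall x, inner (U x) x >= alpha * hnorm x ^ 2)
  (Hbd : forall x, hnorm (U x) <= mu * hnorm x) (Ha : 0 < alpha) (Hmu : 0 < mu).

Lemma coercive_sub x y : alpha * inner (hsub x y) (hsub x y) <= inner (hsub (U x) (U y)) (hsub x y).
Proof. rewrite <- (lin_sub U Hlin). rewrite <- hnorm_pow2. apply Rge_le, Hco. Qed.

Lemma coercive_norm x y : alpha * hnorm (hsub x y) <= hnorm (hsub (U x) (U y)).
Proof.
  assert (H := coercive_sub x y).
  assert (H2 := cauchy_schwarz_le (hsub (U x) (U y)) (hsub x y)).
  rewrite <- (hnorm_sq (hsub x y)) in H.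
  destruct (hnorm_pos (hsub x y)) as [H3|H3].
  - apply (Rmult_le_reg_r (hnorm (hsub x y))); auto. nra.
  - rewrite <- H3. rewrite Rmult_0_r. apply hnorm_pos.
Qed.

Lemma strongly_positive_injective x y : U x = U y -> x = y.
Proof.
  intros E. apply sub_zero_eq, hnorm_zero_eq. assert (H := coercive_norm x y).
  rewrite E in H. replace (hsub (U y) (U y)) with (hzero K) in H by vec_eq.
  rewrite hnorm_zero in H. assert (H2 := hnorm_pos (hsub x y)). nra.
Qed.

Lemma strongly_positive_pos x : 0 <= inner (U x) x.
Proof. assert (H := Hco x). assert (0 <= hnorm x ^ 2) by (apply pow2_ge_0). nra. Qed.

Lemma strongly_positive_le x : inner (U x) x <= mu * inner x x.
Proof.
  eapply Rle_trans. apply cauchy_schwarz_le. rewrite <- hnorm_sq. assert (H := Hbd x).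
  assert (H1 := hnorm_pos x). nra.
Qed.

(* The range is closed: preimages of a convergent sequence form a Cauchy sequence. *)
Lemma strongly_positive_range_closed : closed_set (fun v => exists x, U x = v).
Proof.
  intros v l Hv Hl. destruct (choice_nat _ Hv) as [x Hx].
  destruct (cauchy_strong_cv x) as [xl Hxl].
  { intros e He. rewrite strong_cv_iff in Hl. destruct (Hl (alpha * e / 2)) as [N HN].
    { apply Rdiv_lt_0_compat; nra. }
    exists N. intros n m Hn Hm.
    assert (H1 := HN n Hn). assert (H2 := HN m Hm). rewrite hnorm_sub_sym in H2.
    assert (H3 := norm_triangle_sub (v n) l (v m)). assert (H4 := coercive_norm (x n) (x m)).
    rewrite !Hx in H4. apply (Rmult_lt_reg_l alpha); auto. lra. }
  exists xl. eapply strong_unique. 2: exact Hl.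
  apply strong_cv_iff. intros e He. rewrite strong_cv_iff in Hxl.
  destruct (Hxl (e / mu)) as [N HN]. apply Rdiv_lt_0_compat; lra.
  exists N. intros n Hn. rewrite <- Hx, <- (lin_sub U Hlin). eapply Rle_lt_trans. apply Hbd.
  specialize (HN n Hn). apply (Rmult_lt_compat_l mu) in HN; auto.
  replace (mu * (e / mu)) with e in HN by (field; lra). lra.
Qed.

(* Surjectivity: the range is a closed subspace whose orthogonal complement is trivial. *)
Lemma strongly_positive_surjective y : exists x, U x = y.
Proof.
  set (Rg := fun v => exists x, U x = v).
  assert (HS : subspace Rg).
  { split; [|split].
    - exists (hzero K). apply lin_zero; auto.
    - intros a b [xa <-] [xb <-]. exists (hadd K xa xb). apply lin_add; auto.
    - intros t a [xa <-]. exists (hscal K t xa). apply lin_scal; auto. }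
  destruct (orthogonal_projection Rg HS strongly_positive_range_closed y) as [p [[xp Hp] Horth]].
  assert (H := Horth (U (hsub y p)) (ex_intro _ _ eq_refl)).
  rewrite inner_sym in H. assert (H2 := Hco (hsub y p)). rewrite hnorm_pow2 in H2.
  assert (H3 : inner (hsub y p) (hsub y p) = 0) by (assert (H4 := inner_pos (hsub y p)); nra).
  apply inner_zero_eq, sub_zero_eq in H3. exists xp. congruence.
Qed.

Lemma inv_op_right y : U (inv_op U y) = y.
Proof. unfold inv_op. apply epsilon_spec. apply strongly_positive_surjective. Qed.

Lemma inv_op_left x : inv_op U (U x) = x.
Proof. apply strongly_positive_injective. apply inv_op_right. Qed.

Lemma inv_op_linear : is_linear (inv_op U).
Proof. intros a x y. apply strongly_positive_injective. rewrite inv_op_right, (Hlin a), !inv_op_right. auto. Qed.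

Lemma inv_op_pos x : 0 <= inner (inv_op U x) x.
Proof. rewrite <- (inv_op_right x) at 2. rewrite inner_sym. apply strongly_positive_pos. Qed.

Lemma inv_op_norm x : alpha * hnorm (inv_op U x) <= hnorm x.
Proof.
  assert (H := coercive_norm (inv_op U x) (hzero K)).
  rewrite (lin_zero U Hlin), inv_op_right in H.
  replace (hsub (inv_op U x) (hzero K)) with (inv_op U x) in H by vec_eq.
  replace (hsub x (hzero K)) with x in H by vec_eq. exact H.
Qed.

Hypothesis Hsa : self_adjoint U.

Lemma inv_op_self_adjoint : self_adjoint (inv_op U).
Proof. intros x y. rewrite <- (inv_op_right y) at 1. rewrite <- Hsa. rewrite inv_op_right. auto. Qed.

Lemma inv_op_lower x : inner x x <= mu * inner (inv_op U x) x.
Proof.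
  set (v := inv_op U x). assert (E : x = U v) by (unfold v; rewrite inv_op_right; auto).
  rewrite E. rewrite (inner_sym v (U v)).
  assert (H := positive_cauchy_schwarz U Hlin Hsa strongly_positive_pos v (U v)).
  assert (H2 := strongly_positive_le (U v)).
  assert (H3 := strongly_positive_pos v).
  destruct (inner_pos (U v)) as [H4|H4].
  - apply (Rmult_le_reg_r (inner (U v) (U v))); auto. nra.
  - rewrite <- H4. nra.
Qed.

End StronglyPositive.

Lemma loewner_inv {K : HilbertSpace} (U1 U2 : K -> K) alpha mu c :
  is_linear U1 -> self_adjoint U1 -> (forall x, inner (U1 x) x >= alpha * hnorm x ^ 2) ->
  (forall x, hnorm (U1 x) <= mu * hnorm x) ->
  is_linear U2 -> (forall x, inner (U2 x) x >= alpha * hnorm x ^ 2) ->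
  (forall x, hnorm (U2 x) <= mu * hnorm x) -> 0 < alpha -> 0 < mu -> 0 <= c ->
  (forall z, inner (hscal K c (U2 z)) z >= inner (U1 z) z) ->
  forall x, inner (inv_op U2 x) x <= c * inner (inv_op U1 x) x.
Proof.
  intros L1 S1 C1 B1 L2 C2 B2 Ha Hm Hc Hlw x.
  set (a := inv_op U2 x). assert (Ea : U2 a = x) by (apply (inv_op_right U2 alpha mu); auto).
  assert (H1 : inner (U1 a) a <= c * inner x a).
  { assert (H := Hlw a). rewrite inner_scall, Ea in H. lra. }
  assert (Hpos1 := strongly_positive_pos U1 alpha C1 Ha).
  assert (H2 := positive_cauchy_schwarz U1 L1 S1 Hpos1 (inv_op U1 x) a).
  rewrite (inv_op_right U1 alpha mu L1 C1 B1 Ha Hm) in H2.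
  assert (H3 := inv_op_pos U1 alpha mu L1 C1 B1 Ha Hm x).
  assert (H4 := Hpos1 a).
  rewrite (inner_sym x (inv_op U1 x)) in H2.
  rewrite inner_sym. destruct (Rle_dec (inner x a) 0) as [Hle|Hgt]. nra.
  apply (Rmult_le_reg_r (inner x a)). lra. nra.
Qed.

Section DecreasingMetrics.
Context {K : HilbertSpace} (V : nat -> K -> K) (c a : R).
Hypotheses (Hc : 0 < c) (Ha : 0 < a)
  (V_lin : forall n, is_linear (V n)) (V_sa : forall n, self_adjoint (V n))
  (V_lower : forall n v, c * inner v v <= inner (V n v) v)
  (V_norm : forall n v, a * hnorm (V n v) <= hnorm v)
  (V_decr : forall n v, inner (V (S n) v) v <= inner (V n v) v).

Lemma metric_pos n v : 0 <= inner (V n v) v.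
Proof. assert (H := V_lower n v). assert (H1 := inner_pos v). nra. Qed.

Lemma metric_mono d n m : (n <= m)%nat -> inner (V m d) d <= inner (V n d) d.
Proof. induction 1. lra. eapply Rle_trans. apply V_decr. auto. Qed.

Lemma metric_cv d : exists l, Un_cv (fun n => inner (V n d) d) l.
Proof.
  destruct (decreasing_cv (fun n => inner (V n d) d)) as [l Hl].
  - intro n. apply V_decr.
  - exists 0. intros r [i ->]. unfold opp_seq. assert (H := metric_pos i d). lra.
  - eauto.
Qed.

(* The difference A = V_n - V_m (n <= m) is a positive operator, so by
   Cauchy–Schwarz for A:  a ||A d||^2 <= 2 <A d, d>. *)
Lemma metric_cauchy d n m : (n <= m)%nat ->
  a * inner (hsub (V n d) (V m d)) (hsub (V n d) (V m d))
    <= 2 * (inner (V n d) d - inner (V m d) d).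
Proof.
  intros Hnm. set (A := fun v => hsub (V n v) (V m v)).
  assert (AL : is_linear A). { intros t u v. unfold A. rewrite (V_lin n), (V_lin m). vec_eq. }
  assert (AS : self_adjoint A).
  { intros u v. unfold A. autorewrite with inner. rewrite (V_sa n), (V_sa m). auto. }
  assert (AP : forall v, 0 <= inner (A v) v).
  { intro v. unfold A. rewrite inner_subl. assert (H := metric_mono v n m Hnm). lra. }
  assert (Anorm : a * hnorm (A (A d)) <= 2 * hnorm (A d)).
  { unfold A at 1. rewrite <- hnorm_sub_sym. eapply Rle_trans. apply Rmult_le_compat_l. lra.
    apply norm_triangle_sub with (y := hzero K).
    replace (hsub (V m (A d)) (hzero K)) with (V m (A d)) by vec_eq.
    replace (hsub (hzero K) (V n (A d))) with (hscal K (-1) (V n (A d))) by vec_eq.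
    rewrite hnorm_scal, Rabs_left by lra.
    assert (H1 := V_norm n (A d)). assert (H2 := V_norm m (A d)). lra. }
  assert (H := positive_cauchy_schwarz A AL AS AP d (A d)).
  set (X := inner (A d) (A d)) in *.
  assert (HX : a * inner (A (A d)) (A d) <= 2 * X).
  { eapply Rle_trans. apply Rmult_le_compat_l. lra. apply cauchy_schwarz_le. unfold X.
    rewrite <- hnorm_sq. assert (H2 := hnorm_pos (A d)). nra. }
  assert (E : inner (A d) d = inner (V n d) d - inner (V m d) d) by (unfold A; apply inner_subl).
  change (a * X <= 2 * (inner (V n d) d - inner (V m d) d)). rewrite <- E.
  assert (HAd := AP d). destruct (inner_pos (A d)) as [HX0|HX0].
  - apply (Rmult_le_reg_r X). auto. nra.
  - fold X in HX0. rewrite <- HX0. nra.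
Qed.

Lemma metric_strong_cv d : exists vd, strong_cv (fun n => V n d) vd.
Proof.
  destruct (metric_cv d) as [l Hl]. apply cauchy_strong_cv. intros e He.
  destruct (CV_Cauchy _ (exist _ l Hl) (a * (e * e) / 2)) as [N HN].
  { apply Rdiv_lt_0_compat. apply Rmult_lt_0_compat. lra. nra. lra. }
  exists N. intros n m Hn Hm. apply sqrt_lt_of_sq. apply inner_pos. auto.
  specialize (HN n m Hn Hm). unfold R_dist in HN. apply (Rmult_lt_reg_l a). auto.
  destruct (le_dec n m) as [Hle|Hle].
  - assert (H := metric_cauchy d n m Hle). assert (H1 := metric_mono d n m Hle).
    rewrite Rabs_right in HN by lra. lra.
  - assert (Hle' : (m <= n)%nat) by lia.
    assert (H := metric_cauchy d m n Hle'). assert (H1 := metric_mono d m n Hle').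
    rewrite Rabs_left1 in HN by lra.
    replace (hsub (V n d) (V m d)) with (hscal K (-1) (hsub (V m d) (V n d))) by vec_eq.
    rewrite inner_scall, inner_scalr. lra.
Qed.

Context (x : nat -> K) (Z : K -> Prop).
Hypothesis fejer : forall z, Z z -> forall n,
  inner (V (S n) (hsub (x (S n)) z)) (hsub (x (S n)) z) <= inner (V n (hsub (x n) z)) (hsub (x n) z).

Lemma fejer_dist_cv z : Z z -> exists l, Un_cv (fun n => inner (V n (hsub (x n) z)) (hsub (x n) z)) l.
Proof.
  intros Hz. destruct (decreasing_cv (fun n => inner (V n (hsub (x n) z)) (hsub (x n) z))) as [l Hl].
  - intro n. apply fejer. auto.
  - exists 0. intros r [i ->]. unfold opp_seq. assert (H := metric_pos i (hsub (x i) z)). lra.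
  - eauto.
Qed.

Lemma fejer_dist_le z : Z z -> forall n,
  inner (V n (hsub (x n) z)) (hsub (x n) z) <= inner (V 0 (hsub (x 0) z)) (hsub (x 0) z).
Proof. intros Hz n. induction n. lra. eapply Rle_trans. apply fejer. auto. auto. Qed.

Lemma fejer_bounded z : Z z -> exists C, forall n, hnorm (x n) <= C.
Proof.
  intros Hz. set (M := inner (V 0 (hsub (x 0) z)) (hsub (x 0) z) / c).
  exists (hnorm z + sqrt M). intro n.
  assert (Hd : hnorm (hsub (x n) z) <= sqrt M).
  { apply norm_le_sqrt. unfold M. apply (Rmult_le_reg_l c). auto.
    replace (c * (inner (V 0 (hsub (x 0) z)) (hsub (x 0) z) / c))
      with (inner (V 0 (hsub (x 0) z)) (hsub (x 0) z)) by (field; lra).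
    eapply Rle_trans. apply V_lower. apply fejer_dist_le. auto. }
  replace (x n) with (hadd K (hsub (x n) z) z) by vec_eq.
  eapply Rle_trans. apply norm_triangle. lra.
Qed.

(* For two points of Z, the cross terms <x_n, V_n (z1 - z2)> converge:
   expand the two Fejér distances. *)
Lemma cross_term_cv z1 z2 : Z z1 -> Z z2 ->
  exists l, Un_cv (fun n => inner (x n) (V n (hsub z1 z2))) l.
Proof.
  intros H1 H2. destruct (fejer_dist_cv z1 H1) as [a1 Ha1]. destruct (fejer_dist_cv z2 H2) as [a2 Ha2].
  destruct (metric_cv z1) as [s1 Hs1]. destruct (metric_cv z2) as [s2 Hs2].
  exists ((a2 - a1 + s1 - s2) / 2).
  apply (cv_ext (fun n => (inner (V n (hsub (x n) z2)) (hsub (x n) z2)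
                         - inner (V n (hsub (x n) z1)) (hsub (x n) z1)
                         + inner (V n z1) z1 - inner (V n z2) z2) * / 2)).
  - intro n. rewrite !(lin_sub _ (V_lin n)). autorewrite with inner.
    rewrite (V_sa n (x n) z1), (V_sa n (x n) z2), (inner_sym (V n z1) (x n)),
      (inner_sym (V n z2) (x n)). field.
  - apply (CV_mult _ (fun _ => / 2)). repeat apply CV_minus; try apply CV_plus; auto.
    apply CV_minus; auto. apply cv_const.
Qed.

Lemma cross_term_subseq_limit d vd C rho xl : (forall n, hnorm (x n) <= C) ->
  strong_cv (fun n => V n d) vd -> (forall k, (k <= rho k)%nat) -> weak_cv (fun k => x (rho k)) xl ->
  Un_cv (fun k => inner (x (rho k)) (V (rho k) d)) (inner xl vd).
Proof.
  intros HC Hvd Hrho Hw.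
  apply (cv_ext (fun k => inner (x (rho k)) vd + inner (x (rho k)) (hsub (V (rho k) d) vd))).
  { intro k. rewrite inner_subr. ring. }
  replace (inner xl vd) with (inner xl vd + 0) by ring. apply CV_plus. apply Hw.
  apply squeeze_zero with (d := fun k => C * hnorm (hsub (V (rho k) d) vd)).
  - intro k. apply (bounded_inner (fun n => x (rho n)) C). auto.
  - replace 0 with (C * 0) by ring. apply cv_scale.
    apply (cv_subseq rho (fun n => hnorm (hsub (V n d) vd))). auto. apply Hvd.
Qed.

Lemma fejer_cluster_unique (rho1 rho2 : nat -> nat) x1 x2 : Z x1 -> Z x2 ->
  (forall k, (k <= rho1 k)%nat) -> (forall k, (k <= rho2 k)%nat) ->
  weak_cv (fun k => x (rho1 k)) x1 -> weak_cv (fun k => x (rho2 k)) x2 -> x1 = x2.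
Proof.
  intros Z1 Z2 H1 H2 W1 W2. destruct (fejer_bounded x1 Z1) as [C HC].
  set (d := hsub x1 x2). destruct (metric_strong_cv d) as [vd Hvd].
  destruct (cross_term_cv x1 x2 Z1 Z2) as [t Ht]. fold d in Ht.
  assert (E1 : t = inner x1 vd).
  { eapply UL_sequence. apply (cv_subseq rho1 _ _ H1 Ht).
    apply (cross_term_subseq_limit d vd C); auto. }
  assert (E2 : t = inner x2 vd).
  { eapply UL_sequence. apply (cv_subseq rho2 _ _ H2 Ht).
    apply (cross_term_subseq_limit d vd C); auto. }
  assert (Hd0 : inner vd d = 0). { unfold d. rewrite inner_subr, !(inner_sym vd). lra. }
  assert (Hlow : c * inner d d <= inner vd d).
  { apply cv_ge_const with (a := fun n => inner (V n d) d).
    intro n. apply V_lower. apply (strong_weak _ _ Hvd d). }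
  apply sub_zero_eq, inner_zero_eq. fold d. assert (HDD := inner_pos d). nra.
Qed.

Theorem decreasing_metric_opial : (exists z, Z z) ->
  (forall rho xl, (forall k, (k <= rho k)%nat) -> weak_cv (fun k => x (rho k)) xl -> Z xl) ->
  exists xb, Z xb /\ weak_cv x xb.
Proof.
  intros [z0 Hz0] Hcl. destruct (fejer_bounded z0 Hz0) as [C HC].
  destruct (weak_compact x C HC) as [rho [xb [Hrho Hw]]].
  assert (Zxb : Z xb) by (eapply Hcl; eauto).
  exists xb. split. auto. apply (weak_cv_of_unique_cluster x C xb HC).
  intros rho' l' Hrho' Hw'.
  apply (fejer_cluster_unique rho' rho); eauto.
Qed.

End DecreasingMetrics.

Section ConvexFunctions.
Context {K : HilbertSpace} (f : K -> ereal) (Hconv : convex f).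

Lemma level_convex (c : R) : convex_set (fun w : K => ele (f w) (Fin c)).
Proof.
  intros a b t Ht Ha' Hb'. destruct (Req_dec t 0) as [->|H0].
  { replace (hadd K (hscal K 0 a) (hscal K (1 - 0) b)) with b by vec_eq. auto. }
  destruct (Req_dec t 1) as [->|H1].
  { replace (hadd K (hscal K 1 a) (hscal K (1 - 1) b)) with a by vec_eq. auto. }
  assert (Hc := Hconv a b t ltac:(lra)).
  destruct (f a) as [fa|]; [|contradiction]. destruct (f b) as [fb|]; [|contradiction].
  simpl in *. destruct (f (hadd K (hscal K t a) (hscal K (1 - t) b))) as [v|]; simpl in *;
  [|contradiction]. nra.
Qed.

Lemma level_closed (c : R) : lsc f -> closed_set (fun w : K => ele (f w) (Fin c)).
Proof. intros Hlsc u l Hu Hl. eapply Hlsc; eauto. Qed.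

(* Apply the hypothesis at z_t = t y + (1 - t) xt and let t -> 0. *)
Lemma minty (B : K -> K) (beta : R) (xt : K) (v : R) : lipschitz beta B -> f xt = Fin v ->
  (forall z fz, f z = Fin fz -> v <= fz + inner (B z) (hsub z xt)) -> VI_solution f B xt.
Proof.
  intros Hlip Hv Hm y'. rewrite Hv. destruct (f y') as [fy|] eqn:Ey; simpl; auto.
  cut (inner (hsub xt y') (B xt) + v - fy <= 0). lra.
  apply le_of_le_small with (c := beta * inner (hsub y' xt) (hsub y' xt)). intros t Ht.
  set (zt := hadd K (hscal K t y') (hscal K (1 - t) xt)).
  assert (Hc := Hconv y' xt t Ht). rewrite Ey, Hv in Hc. fold zt in Hc. simpl in Hc.
  destruct (f zt) as [fzt|] eqn:Ezt; [|contradiction]. simpl in Hc.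
  assert (H := Hm zt fzt Ezt).
  assert (E1 : hsub zt xt = hscal K t (hsub y' xt)) by (unfold zt; vec_eq).
  rewrite E1, inner_scalr in H.
  assert (H2 : v <= fy + inner (B zt) (hsub y' xt)).
  { apply (Rmult_le_reg_l t). lra. nra. }
  assert (H3 : inner (hsub (B zt) (B xt)) (hsub y' xt) <= beta * t * inner (hsub y' xt) (hsub y' xt)).
  { eapply Rle_trans. apply cauchy_schwarz_le. assert (Hl := Hlip zt xt).
    rewrite E1, hnorm_scal, Rabs_right in Hl by lra. rewrite <- hnorm_sq.
    assert (HH1 := hnorm_pos (hsub y' xt)). assert (HH2 := hnorm_pos (hsub (B zt) (B xt))). nra. }
  rewrite inner_subl in H3.
  assert (E2 : inner (hsub xt y') (B xt) = - inner (B xt) (hsub y' xt)).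
  { rewrite inner_sym. replace (hsub xt y') with (hscal K (-1) (hsub y' xt)) by vec_eq.
    rewrite inner_scalr. ring. }
  rewrite E2. nra.
Qed.

End ConvexFunctions.

(* Products of (1 + eta_k) for a summable nonnegative sequence eta stay bounded
   (by exp of the sum); they are used to renormalize metrics that only decrease
   up to the factors (1 + eta_n). *)
Section SummableProduct.
Context (eta : nat -> R) (eta_nonneg : forall n, 0 <= eta n)
  (eta_summable : exists l, infinite_sum eta l).

Fixpoint weight (n : nat) : R := match n with O => 1 | S m => weight m * (1 + eta m) end.

Lemma weight_ge1 n : 1 <= weight n.
Proof. induction n; simpl. lra. specialize (eta_nonneg n). nra. Qed.

Lemma weight_le_exp n : weight (S n) <= exp (sum_f_R0 eta n).
Proof.
  induction n; simpl.
  - assert (H := exp_ineq1_le (eta 0%nat)). lra.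
  - rewrite exp_plus. assert (H1 := exp_ineq1_le (eta (S n))). assert (H2 := weight_ge1 n).
    assert (H3 := eta_nonneg n). assert (H4 := eta_nonneg (S n)).
    apply Rmult_le_compat; simpl in IHn; nra.
Qed.

Definition eta_sum : R := epsilon (inhabits 0) (fun l => infinite_sum eta l).

Lemma partial_sum_le n : sum_f_R0 eta n <= eta_sum.
Proof.
  assert (Hs : infinite_sum eta eta_sum) by (unfold eta_sum; apply epsilon_spec; auto).
  assert (Hmono : forall m, (n <= m)%nat -> sum_f_R0 eta n <= sum_f_R0 eta m).
  { induction 1. lra. simpl. specialize (eta_nonneg (S m)). lra. }
  apply Rnot_lt_le. intro Hlt. destruct (Hs (sum_f_R0 eta n - eta_sum)) as [N HN]. lra.
  specialize (HN (max N n) ltac:(lia)). unfold R_dist in HN.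
  assert (H := Hmono (max N n) ltac:(lia)). rewrite Rabs_right in HN by lra. lra.
Qed.

Definition weight_bound : R := exp eta_sum.

Lemma weight_le_bound n : weight n <= weight_bound.
Proof.
  unfold weight_bound. destruct n.
  - simpl. assert (H := partial_sum_le 0). assert (H0 := eta_nonneg 0%nat). simpl in H.
    assert (H1 := exp_ineq1_le eta_sum). lra.
  - eapply Rle_trans. apply weight_le_exp.
    destruct (partial_sum_le n) as [H|H]. left. apply exp_increasing. auto. rewrite H. lra.
Qed.

End SummableProduct.

Section Algorithm.
Context (K : HilbertSpace) (f : K -> ereal) (alpha beta : R) (B : K -> K)
  (eta : nat -> R) (U : nat -> K -> K) (mu : R) (eps : R)
  (gamma : nat -> R) (x y p q : nat -> K).
Hypotheses (Hprop : proper f) (Hlsc : lsc f) (Hconv : convex f)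
  (Ha : 0 < alpha) (Hb : 0 < beta) (Hmon : monotone B) (Hlip : lipschitz beta B)
  (Heta : forall n, 0 <= eta n) (Hsum : exists l, infinite_sum eta l)
  (HU : forall n, P_alpha alpha (U n))
  (Hmu : is_lub (fun r => exists n, is_opnorm (U n) r) mu)
  (Hlw : forall n, loewner_ge (fun z => hscal K (1 + eta n) (U (S n) z)) (U n))
  (Heps : 0 < eps < Rmin 1 (1 / (mu * beta + 1)))
  (Hgam : forall n, eps <= gamma n <= (1 - eps) / (beta * mu))
  (Hsol : exists xb, VI_solution f B xb)
  (Hy : forall n, y n = hsub (x n) (hscal K (gamma n) (U n (B (x n)))))
  (Hp : forall n, forall z : K,
      ele (eaddr (1 / (2 * gamma n) * (Mnorm (inv_op (U n)) (hsub (p n) (y n))) ^ 2) (f (p n)))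
          (eaddr (1 / (2 * gamma n) * (Mnorm (inv_op (U n)) (hsub z (y n))) ^ 2) (f z)))
  (Hq : forall n, q n = hsub (p n) (hscal K (gamma n) (U n (B (p n)))))
  (Hx : forall n, x (S n) = hadd K (hsub (x n) (y n)) (q n)).

Lemma U_lin n : is_linear (U n).
Proof. apply (HU n). Qed.
Lemma U_co n : forall z, inner (U n z) z >= alpha * hnorm z ^ 2.
Proof. apply (HU n). Qed.

(* mu bounds every operator norm ||U_n||, and mu > 0 since the step sizes are finite. *)
Lemma opnorm_exists n : exists c, is_opnorm (U n) c.
Proof.
  destruct (HU n) as [[_ [c Hc]] _].
  destruct (completeness (fun r => exists z, hnorm z <= 1 /\ r = hnorm (U n z))) as [m Hm].
  - exists (Rabs c). intros r [z [Hz ->]]. assert (Hcz := Hc z). assert (Hn := hnorm_pos z).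
    assert (Hca := Rle_abs c). assert (Hca2 := Rabs_pos c). nra.
  - exists (hnorm (U n (hzero K))). exists (hzero K). split; auto. rewrite hnorm_zero. lra.
  - exists m. exact Hm.
Qed.

Lemma mu_pos : 0 < mu.
Proof.
  destruct (opnorm_exists 0) as [c Hc].
  assert (Hcmu : c <= mu) by (apply (proj1 Hmu); exists 0%nat; auto).
  assert (H0 : 0 <= c).
  { apply (proj1 Hc). exists (hzero K). split. rewrite hnorm_zero. lra.
    rewrite (lin_zero _ (U_lin 0)), hnorm_zero. auto. }
  destruct (Req_dec mu 0) as [E|E]; [|lra]. exfalso. specialize (Hgam 0%nat).
  rewrite E, Rmult_0_r in Hgam. unfold Rdiv in Hgam. rewrite Rinv_0, Rmult_0_r in Hgam. lra.
Qed.

Lemma U_bd n z : hnorm (U n z) <= mu * hnorm z.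
Proof.
  destruct (opnorm_exists n) as [c Hc].
  assert (Hcm : c <= mu) by (apply (proj1 Hmu); exists n; auto).
  destruct (hnorm_pos z) as [Hz|Hz].
  - set (z' := hscal K (/ hnorm z) z).
    assert (Hpos : 0 < / hnorm z) by (apply Rinv_0_lt_compat; auto).
    assert (Hz' : hnorm z' = 1). { unfold z'. rewrite hnorm_scal, Rabs_right by lra. field. lra. }
    assert (H := proj1 Hc (hnorm (U n z')) (ex_intro _ z' (conj (Req_le _ _ Hz') eq_refl))).
    unfold z' in H. rewrite (lin_scal _ (U_lin n)), hnorm_scal, Rabs_right in H by lra.
    apply (Rmult_le_compat_l (hnorm z)) in H; [|lra].
    replace (hnorm z * (/ hnorm z * hnorm (U n z))) with (hnorm (U n z)) in H by (field; lra).
    nra.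
  - rewrite <- Hz. symmetry in Hz. apply hnorm_zero_eq in Hz. subst z.
    rewrite (lin_zero _ (U_lin n)), hnorm_zero. lra.
Qed.

Definition Wn (n : nat) : K -> K := inv_op (U n).

Lemma Wn_U n z : Wn n (U n z) = z.
Proof. apply (inv_op_left _ alpha mu (U_lin n) (U_co n) (U_bd n) Ha mu_pos). Qed.
Lemma Wn_lin n : is_linear (Wn n).
Proof. apply (inv_op_linear _ alpha mu (U_lin n) (U_co n) (U_bd n) Ha mu_pos). Qed.
Lemma Wn_sa n : self_adjoint (Wn n).
Proof. apply (inv_op_self_adjoint _ alpha mu (U_lin n) (U_co n) (U_bd n) Ha mu_pos), (HU n). Qed.
Lemma Wn_pos n z : 0 <= inner (Wn n z) z.
Proof. apply (inv_op_pos _ alpha mu (U_lin n) (U_co n) (U_bd n) Ha mu_pos). Qed.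
Lemma Wn_lower n z : inner z z <= mu * inner (Wn n z) z.
Proof. apply (inv_op_lower _ alpha mu (U_lin n) (U_co n) (U_bd n) Ha mu_pos), (HU n). Qed.
Lemma Wn_norm n z : alpha * hnorm (Wn n z) <= hnorm z.
Proof. apply (inv_op_norm _ alpha mu (U_lin n) (U_co n) (U_bd n) Ha mu_pos). Qed.
Lemma Wn_loewner n z : inner (Wn (S n) z) z <= (1 + eta n) * inner (Wn n z) z.
Proof.
  apply (loewner_inv (U n) (U (S n)) alpha mu (1 + eta n) (U_lin n) (proj1 (proj2 (HU n)))
    (U_co n) (U_bd n) (U_lin (S n)) (U_co (S n)) (U_bd (S n)) Ha mu_pos).
  specialize (Heta n). lra. apply Hlw.
Qed.

Lemma Mnorm_sq n v : Mnorm (inv_op (U n)) v ^ 2 = inner (Wn n v) v.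
Proof. unfold Mnorm. rewrite pow2_sqrt. auto. apply Wn_pos. Qed.

Definition Vn (n : nat) (v : K) : K := hscal K (/ weight eta n) (Wn n v).

Lemma weight_pos n : 0 < weight eta n.
Proof. assert (H := weight_ge1 eta Heta n). lra. Qed.

Lemma Vn_lin n : is_linear (Vn n).
Proof. intros a u v. unfold Vn. rewrite (Wn_lin n). vec_eq. Qed.

Lemma Vn_sa n : self_adjoint (Vn n).
Proof. intros u v. unfold Vn. rewrite inner_scall, inner_scalr, (Wn_sa n). auto. Qed.

Lemma Vn_inner n d : inner (Vn n d) d = inner (Wn n d) d / weight eta n.
Proof. unfold Vn. rewrite inner_scall. unfold Rdiv. ring. Qed.

Lemma Vn_lower n d : / (mu * weight_bound eta) * inner d d <= inner (Vn n d) d.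
Proof.
  rewrite Vn_inner. assert (H := Wn_lower n d). assert (Hm := mu_pos).
  assert (HP := weight_le_bound eta Heta Hsum n).
  assert (H1 := weight_pos n). assert (H2 := inner_pos d). assert (H3 := Wn_pos n d).
  apply (Rmult_le_reg_r (mu * weight_bound eta * weight eta n)).
  apply Rmult_lt_0_compat; [apply Rmult_lt_0_compat|]; lra.
  replace (/ (mu * weight_bound eta) * inner d d * (mu * weight_bound eta * weight eta n))
    with (inner d d * weight eta n) by (field; split; lra).
  replace (inner (Wn n d) d / weight eta n * (mu * weight_bound eta * weight eta n))
    with (mu * inner (Wn n d) d * weight_bound eta) by (field; lra).
  nra.
Qed.

Lemma Vn_lower_pos : 0 < / (mu * weight_bound eta).
Proof. apply Rinv_0_lt_compat, Rmult_lt_0_compat. apply mu_pos. apply exp_pos. Qed.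

Lemma Vn_norm n v : alpha * hnorm (Vn n v) <= hnorm v.
Proof.
  unfold Vn. rewrite hnorm_scal, Rabs_right by (left; apply Rinv_0_lt_compat, weight_pos).
  assert (H := Wn_norm n v). assert (H1 := weight_ge1 eta Heta n).
  assert (H2 : / weight eta n <= 1) by (rewrite <- Rinv_1; apply Rinv_le_contravar; lra).
  assert (H3 := hnorm_pos (Wn n v)). assert (0 < / weight eta n) by (apply Rinv_0_lt_compat, weight_pos).
  assert (0 <= alpha * hnorm (Wn n v)) by nra. nra.
Qed.

Lemma Vn_descent n u v d : 0 <= d -> inner (Wn n u) u <= inner (Wn n v) v - d ->
  inner (Vn (S n) u) u <= inner (Vn n v) v - d / weight_bound eta.
Proof.
  intros Hd H. rewrite !Vn_inner. simpl weight.
  assert (Hl := Wn_loewner n u). assert (He := Heta n). assert (Hw := weight_pos n).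
  assert (HP := weight_le_bound eta Heta Hsum n).
  assert (E : inner (Wn (S n) u) u / (weight eta n * (1 + eta n)) <= inner (Wn n u) u / weight eta n).
  { unfold Rdiv. rewrite Rinv_mult.
    apply Rmult_le_reg_r with (r := weight eta n * (1 + eta n)). nra.
    replace (inner (Wn (S n) u) u * (/ weight eta n * / (1 + eta n)) * (weight eta n * (1 + eta n)))
      with (inner (Wn (S n) u) u) by (field; lra).
    replace (inner (Wn n u) u * / weight eta n * (weight eta n * (1 + eta n)))
      with ((1 + eta n) * inner (Wn n u) u) by (field; lra). auto. }
  assert (E2 : d / weight_bound eta <= d / weight eta n).
  { unfold Rdiv. apply Rmult_le_compat_l. auto. apply Rinv_le_contravar; lra. }
  assert (E3 : inner (Wn n u) u / weight eta n <= (inner (Wn n v) v - d) / weight eta n).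
  { unfold Rdiv. apply Rmult_le_compat_r. left. apply Rinv_0_lt_compat. lra. auto. }
  unfold Rdiv in *. lra.
Qed.

Lemma Vn_decr n v : inner (Vn (S n) v) v <= inner (Vn n v) v.
Proof.
  assert (H := Vn_descent n v v 0 (Rle_refl 0) ltac:(lra)).
  unfold Rdiv in H. rewrite Rmult_0_l in H. lra.
Qed.

Lemma gam_pos n : 0 < gamma n.
Proof. specialize (Hgam n). lra. Qed.

Lemma step_bound n : gamma n * beta * mu <= 1 - eps.
Proof.
  destruct (Hgam n) as [_ H]. assert (Hm := mu_pos).
  assert (Hbm : 0 < beta * mu) by (apply Rmult_lt_0_compat; lra).
  apply (Rmult_le_compat_r (beta * mu)) in H; [|lra].
  replace ((1 - eps) / (beta * mu) * (beta * mu)) with (1 - eps) in H by (field; lra).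
  rewrite Rmult_assoc. lra.
Qed.

Lemma prox_finite n : exists fp, f (p n) = Fin fp.
Proof.
  destruct Hprop as [z0 Hz0]. specialize (Hp n z0). destruct (f z0) as [r|]; [|congruence].
  destruct (f (p n)) as [fp|]. eauto. simpl in Hp. contradiction.
Qed.

Lemma solution_finite z : VI_solution f B z -> exists fz, f z = Fin fz.
Proof.
  intros Hz. destruct (prox_finite 0) as [fp Hfp]. specialize (Hz (p 0%nat)). rewrite Hfp in Hz.
  destruct (f z) as [fz|]. eauto. simpl in Hz. contradiction.
Qed.

(* First-order optimality of the proximal point p_n, obtained by comparing with
   the convex combinations t z + (1 - t) p_n and letting t -> 0. *)
Lemma prox_optimality n fp : f (p n) = Fin fp -> forall z fz, f z = Fin fz ->
  fp + / gamma n * inner (Wn n (hsub (y n) (p n))) (hsub z (p n)) <= fz.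
Proof.
  intros Hfp z fz Hfz. assert (Hg := gam_pos n). remember (gamma n) as g eqn:Eg.
  assert (HL := Wn_lin n). assert (HS := Wn_sa n). remember (Wn n) as W eqn:EW.
  set (a := hsub (p n) (y n)). set (b := hsub z (p n)).
  assert (E3 : hsub (y n) (p n) = hscal K (-1) a) by (unfold a; vec_eq).
  rewrite E3, (lin_scal _ HL), inner_scall.
  cut (- (fz - fp + / g * inner (W a) b) <= 0). lra.
  apply le_of_le_small with (c := / (2 * g) * inner (W b) b). intros t Ht.
  set (zt := hadd K (hscal K t z) (hscal K (1 - t) (p n))).
  assert (Hc := Hconv z (p n) t Ht). rewrite Hfz, Hfp in Hc. fold zt in Hc. simpl in Hc.
  destruct (f zt) as [fzt|] eqn:Ezt; [|contradiction]. simpl in Hc.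
  assert (H := Hp n zt). rewrite Hfp, Ezt, !Mnorm_sq in H. cbn [eaddr ele] in H.
  rewrite <- Eg, <- EW in H.
  assert (E1 : hsub zt (y n) = hadd K a (hscal K t b)) by (unfold zt, a, b; vec_eq).
  rewrite E1, (lin_add _ HL), (lin_scal _ HL) in H. fold a in H. autorewrite with inner in H.
  assert (E2 : inner (W b) a = inner (W a) b) by (rewrite HS, inner_sym; auto).
  rewrite E2 in H. replace (1 / (2 * g)) with (/ (2*g)) in H by (field; lra).
  assert (H4 : 0 <= t * (fz - fp) + / g * t * inner (W a) b + / (2*g) * (t * t) * inner (W b) b).
  { assert (Hexp : / (2 * g) * (inner (W a) a + t * inner (W a) b + (t * inner (W a) b + t * (t * inner (W b) b)))
       = / (2*g) * inner (W a) a + / g * t * inner (W a) b + / (2*g) * (t*t) * inner (W b) b)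
      by (field; lra).
    nra. }
  assert (H5 : 0 <= (fz - fp) + / g * inner (W a) b + t * (/ (2*g) * inner (W b) b)).
  { apply (Rmult_le_reg_l t). lra. nra. }
  lra.
Qed.

(* The residual of the n-th step seen from a point z; it vanishes as x_n - p_n -> 0. *)
Definition residual (n : nat) (z : K) : R :=
  - / gamma n * inner (Wn n (hsub (x n) (p n))) (hsub z (p n))
  + inner (hsub (B (x n)) (B (p n))) (hsub z (p n)).

Lemma prox_gap n z fz fp : f z = Fin fz -> f (p n) = Fin fp ->
  fp <= fz + inner (B z) (hsub z (p n)) + residual n z.
Proof.
  intros Hfz Hfp. assert (Hpi := prox_optimality n fp Hfp z fz Hfz). assert (Hg := gam_pos n).
  assert (HL := Wn_lin n). assert (Hmo := Hmon z (p n)).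
  assert (Eyp : hsub (y n) (p n) = hsub (hsub (x n) (p n)) (hscal K (gamma n) (U n (B (x n)))))
    by (rewrite Hy; vec_eq).
  rewrite Eyp, (lin_sub _ HL), (lin_scal _ HL), Wn_U in Hpi. autorewrite with inner in Hpi.
  unfold residual. autorewrite with inner. autorewrite with inner in Hmo.
  assert (S1 := inner_sym (B z) z). assert (S2 := inner_sym (B z) (p n)).
  assert (S3 := inner_sym (B (p n)) z). assert (S4 := inner_sym (B (p n)) (p n)).
  set (w1 := inner (Wn n (hsub (x n) (p n))) z) in *.
  set (w2 := inner (Wn n (hsub (x n) (p n))) (p n)) in *.
  set (b1 := inner (B (x n)) z) in *. set (b2 := inner (B (x n)) (p n)) in *.
  assert (E : / gamma n * (w1 - gamma n * b1 - (w2 - gamma n * b2)) = / gamma n * (w1 - w2) - (b1 - b2))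
    by (field; lra).
  rewrite E in Hpi. lra.
Qed.

Lemma solution_residual_nonneg n z : VI_solution f B z -> 0 <= residual n z.
Proof.
  intros Hz. destruct (prox_finite n) as [fp Hfp]. destruct (solution_finite z Hz) as [fz Hfz].
  assert (H := prox_gap n z fz fp Hfz Hfp). assert (Hvi := Hz (p n)).
  rewrite Hfp, Hfz in Hvi. simpl in Hvi.
  rewrite (inner_sym (hsub z (p n)) (B z)) in Hvi. lra.
Qed.

Lemma residual_bound C : (forall n, hnorm (p n) <= C) -> forall n z,
  Rabs (residual n z) <= (/ (eps * alpha) + beta) * (hnorm z + C) * hnorm (hsub (x n) (p n)).
Proof.
  intros HC n z. unfold residual. set (D := hsub (x n) (p n)). set (v := hsub z (p n)).
  assert (Hv : hnorm v <= hnorm z + C).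
  { unfold v. replace (hsub z (p n)) with (hadd K z (hscal K (-1) (p n))) by vec_eq.
    eapply Rle_trans. apply norm_triangle. rewrite hnorm_scal, Rabs_left by lra.
    specialize (HC n). lra. }
  assert (Hg := Hgam n). assert (Hg0 := gam_pos n).
  assert (HW := Wn_norm n D). assert (HD := hnorm_pos D). assert (Hv0 := hnorm_pos v).
  assert (H1 : Rabs (inner (Wn n D) v) <= hnorm D / alpha * hnorm v).
  { eapply Rle_trans. apply cauchy_schwarz. apply Rmult_le_compat_r. auto.
    apply (Rmult_le_reg_l alpha). auto.
    replace (alpha * (hnorm D / alpha)) with (hnorm D) by (field; lra). auto. }
  assert (H2 : Rabs (inner (hsub (B (x n)) (B (p n))) v) <= beta * hnorm D * hnorm v).
  { eapply Rle_trans. apply cauchy_schwarz. apply Rmult_le_compat_r. auto. apply Hlip. }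
  assert (H3 : / gamma n <= / eps) by (apply Rinv_le_contravar; lra).
  eapply Rle_trans. apply Rabs_triang.
  rewrite Rabs_mult, Rabs_Ropp, Rabs_right by (left; apply Rinv_0_lt_compat; auto).
  assert (H4 : / gamma n * Rabs (inner (Wn n D) v) <= / (eps * alpha) * hnorm D * hnorm v).
  { replace (/ (eps * alpha) * hnorm D * hnorm v) with (/ eps * (hnorm D / alpha * hnorm v))
      by (field; lra).
    apply Rmult_le_compat. left; apply Rinv_0_lt_compat; auto. apply Rabs_pos. auto. auto. }
  assert (0 < / (eps * alpha)) by (apply Rinv_0_lt_compat; nra).
  assert (H5 : (/ (eps * alpha) + beta) * hnorm v * hnorm D
               <= (/ (eps * alpha) + beta) * (hnorm z + C) * hnorm D).
  { apply Rmult_le_compat_r. auto. apply Rmult_le_compat_l; lra. }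
  nra.
Qed.

Lemma forward_correction_bound n :
  gamma n ^ 2 * inner (hsub (B (x n)) (B (p n))) (U n (hsub (B (x n)) (B (p n))))
    <= (1 - eps) / mu * inner (hsub (x n) (p n)) (hsub (x n) (p n)).
Proof.
  set (D := hsub (x n) (p n)). set (V := hsub (B (x n)) (B (p n))).
  assert (Hm := mu_pos). assert (Hg := gam_pos n). assert (Hgbm := step_bound n).
  assert (He : eps < 1) by (destruct Heps as [_ H]; assert (H1 := Rmin_l 1 (1 / (mu * beta + 1))); lra).
  assert (HVE : inner V (U n V) <= mu * inner V V).
  { rewrite inner_sym. eapply strongly_positive_le. apply U_bd. }
  assert (HVD : inner V V <= beta * beta * inner D D).
  { unfold V, D. rewrite <- !hnorm_sq. assert (H := Hlip (x n) (p n)).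
    assert (H1 := hnorm_pos (hsub (B (x n)) (B (p n)))). nra. }
  assert (HDD := inner_pos D). assert (HVV := inner_pos V).
  assert (Hgbm0 : 0 <= gamma n * beta * mu) by (apply Rmult_le_pos; [|lra]; apply Rmult_le_pos; lra).
  assert (Hsq : (gamma n * beta * mu) * (gamma n * beta * mu) <= 1 - eps) by nra.
  apply Rle_trans with (gamma n ^ 2 * (mu * (beta * beta * inner D D))).
  { apply Rmult_le_compat_l. nra. nra. }
  replace (gamma n ^ 2 * (mu * (beta * beta * inner D D)))
    with (((gamma n * beta * mu) * (gamma n * beta * mu)) / mu * inner D D) by (field; lra).
  apply Rmult_le_compat_r. auto. unfold Rdiv. apply Rmult_le_compat_r.
  left. apply Rinv_0_lt_compat. auto. auto.
Qed.

Lemma tseng_descent n z : VI_solution f B z ->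
  inner (Wn n (hsub (x (S n)) z)) (hsub (x (S n)) z) <=
  inner (Wn n (hsub (x n) z)) (hsub (x n) z) - eps / mu * inner (hsub (x n) (p n)) (hsub (x n) (p n)).
Proof.
  intros Hz. assert (Hg := gam_pos n). assert (Hm := mu_pos).
  assert (HL := Wn_lin n). assert (HS := Wn_sa n). assert (HUL := U_lin n).
  set (g := gamma n) in *. set (W := Wn n) in *.
  set (P := hsub (p n) z). set (D := hsub (x n) (p n)). set (V := hsub (B (x n)) (B (p n))).
  assert (Hstar : g * inner V P <= inner (W D) P).
  { assert (H := solution_residual_nonneg n z Hz). unfold residual in H. fold g W D V in H.
    replace (hsub z (p n)) with (hscal K (-1) P) in H by (unfold P; vec_eq).
    rewrite !inner_scalr in H. apply (Rmult_le_compat_l g) in H; [|lra].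
    replace (g * (- / g * (-1 * inner (W D) P) + -1 * inner V P)) with (inner (W D) P - g * inner V P)
      in H by (field; lra). lra. }
  assert (Ex1 : hsub (x (S n)) z = hadd K P (hscal K g (U n V))).
  { unfold V. rewrite (lin_sub _ HUL). rewrite Hx, Hy, Hq. unfold P, g. vec_eq. }
  assert (Ex0 : hsub (x n) z = hadd K P D) by (unfold P, D; vec_eq).
  rewrite Ex1, Ex0, !(lin_add _ HL), (lin_scal _ HL). unfold W at 2. rewrite Wn_U. fold W.
  autorewrite with inner.
  rewrite (HS P (U n V)), (HS P D). unfold W at 2. rewrite Wn_U. fold W.
  rewrite (inner_sym P V), (inner_sym P (W D)).
  assert (Hcorr := forward_correction_bound n). fold g D V in Hcorr.
  assert (HWD : inner D D <= mu * inner (W D) D) by apply Wn_lower.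
  assert (HWD' : inner D D / mu <= inner (W D) D).
  { apply (Rmult_le_reg_l mu). auto. replace (mu * (inner D D / mu)) with (inner D D) by (field; lra). auto. }
  assert (Ee : (1 - eps) / mu * inner D D = inner D D / mu - eps / mu * inner D D) by (field; lra).
  nra.
Qed.

Lemma fejer_descent n z : VI_solution f B z ->
  inner (Vn (S n) (hsub (x (S n)) z)) (hsub (x (S n)) z) <=
  inner (Vn n (hsub (x n) z)) (hsub (x n) z)
    - eps / (mu * weight_bound eta) * inner (hsub (x n) (p n)) (hsub (x n) (p n)).
Proof.
  intros Hz. assert (Hm := mu_pos). assert (He : 0 < eps) by lra.
  assert (HD := inner_pos (hsub (x n) (p n))).
  assert (H := Vn_descent n _ _ (eps / mu * inner (hsub (x n) (p n)) (hsub (x n) (p n)))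
    ltac:(apply Rmult_le_pos; [apply Rlt_le, Rdiv_lt_0_compat|]; lra) (tseng_descent n z Hz)).
  assert (HP : 0 < weight_bound eta) by apply exp_pos.
  replace (eps / (mu * weight_bound eta) * inner (hsub (x n) (p n)) (hsub (x n) (p n)))
    with (eps / mu * inner (hsub (x n) (p n)) (hsub (x n) (p n)) / weight_bound eta) by (field; lra).
  exact H.
Qed.

Lemma fejer_solutions z : VI_solution f B z -> forall n,
  inner (Vn (S n) (hsub (x (S n)) z)) (hsub (x (S n)) z) <= inner (Vn n (hsub (x n) z)) (hsub (x n) z).
Proof.
  intros Hz n. assert (H := fejer_descent n z Hz). assert (Hm := mu_pos).
  assert (HP : 0 < weight_bound eta) by apply exp_pos. assert (HD := inner_pos (hsub (x n) (p n))).
  assert (0 <= eps / (mu * weight_bound eta)) by (apply Rlt_le, Rdiv_lt_0_compat; nra).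
  nra.
Qed.

(* Summing the descent terms: ||x_n - p_n|| -> 0, and ||x_n - p_n||^2 is bounded
   by a multiple of the initial distance to a solution. *)
Lemma residual_sq_le z : VI_solution f B z -> forall n,
  inner (hsub (x n) (p n)) (hsub (x n) (p n)) <=
  mu * weight_bound eta / eps * (inner (Vn n (hsub (x n) z)) (hsub (x n) z)
                                  - inner (Vn (S n) (hsub (x (S n)) z)) (hsub (x (S n)) z)).
Proof.
  intros Hz n. assert (H := fejer_descent n z Hz). assert (Hm := mu_pos).
  assert (HP : 0 < weight_bound eta) by apply exp_pos. assert (Hep : 0 < eps) by lra.
  set (D2 := inner (hsub (x n) (p n)) (hsub (x n) (p n))) in *.
  replace D2 with (mu * weight_bound eta / eps * (eps / (mu * weight_bound eta) * D2))
    by (field; repeat split; lra).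
  apply Rmult_le_compat_l. apply Rlt_le, Rdiv_lt_0_compat. nra. lra. lra.
Qed.

Lemma residual_cv0 : Un_cv (fun n => hnorm (hsub (x n) (p n))) 0.
Proof.
  destruct Hsol as [zs Hz].
  destruct (fejer_dist_cv Vn _ Vn_lower_pos Vn_lower x _ fejer_solutions zs Hz) as [l Hl].
  assert (H0 : Un_cv (fun n => inner (hsub (x n) (p n)) (hsub (x n) (p n))) 0).
  { apply squeeze_zero with (d := fun n => mu * weight_bound eta / eps *
       (inner (Vn n (hsub (x n) zs)) (hsub (x n) zs)
        - inner (Vn (S n) (hsub (x (S n)) zs)) (hsub (x (S n)) zs))).
    - intro n. rewrite Rabs_right by (apply Rle_ge, inner_pos). apply residual_sq_le. auto.
    - replace 0 with (mu * weight_bound eta / eps * (l - l)) by ring. apply cv_scale.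
      apply CV_minus. auto. apply (cv_ext (fun n => inner (Vn (n + 1) (hsub (x (n + 1)) zs))
                                                         (hsub (x (n + 1)) zs))).
      intro n. rewrite Nat.add_1_r. auto. apply (CV_shift' _ 1 l Hl). }
  intros e He. destruct (H0 (e * e)) as [N HN]. nra. exists N. intros n Hn. specialize (HN n Hn).
  unfold R_dist in *. rewrite Rminus_0_r in *.
  rewrite Rabs_right in * by (apply Rle_ge; try apply inner_pos; apply hnorm_pos).
  apply sqrt_lt_of_sq. apply inner_pos. lra. auto.
Qed.

Lemma iterates_bounded : exists C, forall n, hnorm (x n) <= C /\ hnorm (p n) <= C.
Proof.
  destruct Hsol as [zs Hz]. assert (Hm := mu_pos). assert (HP : 0 < weight_bound eta) by apply exp_pos.
  assert (Hep : 0 < eps) by lra.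
  destruct (fejer_bounded Vn _ Vn_lower_pos Vn_lower x _ fejer_solutions zs Hz) as [Cx HCx].
  set (M := mu * weight_bound eta / eps * inner (Vn 0 (hsub (x 0%nat) zs)) (hsub (x 0%nat) zs)).
  exists (Cx + sqrt M). intro n. assert (Hs := sqrt_pos M). split. specialize (HCx n). lra.
  assert (HD : hnorm (hsub (x n) (p n)) <= sqrt M).
  { apply norm_le_sqrt. eapply Rle_trans. apply (residual_sq_le zs Hz). unfold M.
    apply Rmult_le_compat_l. apply Rlt_le, Rdiv_lt_0_compat. nra. lra.
    assert (H1 := fejer_dist_le Vn x _ fejer_solutions zs Hz n).
    assert (H2 := metric_pos Vn _ Vn_lower_pos Vn_lower (S n) (hsub (x (S n)) zs)). lra. }
  replace (p n) with (hadd K (x n) (hscal K (-1) (hsub (x n) (p n)))) by vec_eq.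
  eapply Rle_trans. apply norm_triangle. rewrite hnorm_scal, Rabs_left by lra.
  specialize (HCx n). lra.
Qed.

(* At a weak cluster point xt of (x_n), f(xt) <= c' whenever
   f(z) + <B z, z - xt> < c': the points p_(rho k), which converge weakly to xt,
   eventually lie in the closed convex level set {f <= c'} by [prox_gap]. *)
Lemma cluster_level_bound (rho : nat -> nat) xt :
  (forall k, (k <= rho k)%nat) -> weak_cv (fun k => x (rho k)) xt ->
  forall z fz, f z = Fin fz -> forall c', fz + inner (B z) (hsub z xt) < c' -> ele (f xt) (Fin c').
Proof.
  intros Hrho Hw z fz Hfz c' Hc'. destruct iterates_bounded as [C HC].
  assert (Hres : Un_cv (fun n => hnorm (hsub (x n) (p n))) 0) by apply residual_cv0.
  assert (Hpw : weak_cv (fun k => p (rho k)) xt).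
  { apply (weak_cv_ext (fun k => hadd K (x (rho k)) (hscal K (-1) (hsub (x (rho k)) (p (rho k)))))).
    intro k. vec_eq. apply weak_cv_perturb. auto.
    apply (cv_ext (fun k => hnorm (hsub (x (rho k)) (p (rho k))))).
    intro k. rewrite hnorm_scal, Rabs_left by lra. ring.
    apply (cv_subseq rho (fun n => hnorm (hsub (x n) (p n)))); auto. }
  set (cz := fz + inner (B z) (hsub z xt)).
  assert (Hck : Un_cv (fun k => fz + inner (B z) (hsub z (p (rho k))) + residual (rho k) z) cz).
  { unfold cz. rewrite <- (Rplus_0_r (fz + inner (B z) (hsub z xt))).
    apply CV_plus. apply CV_plus. apply cv_const.
    apply (cv_ext (fun k => inner (B z) z - inner (p (rho k)) (B z))).
    intro k. rewrite inner_subr, (inner_sym (B z) (p (rho k))). auto.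
    rewrite inner_subr, (inner_sym (B z) xt). apply CV_minus. apply cv_const. apply Hpw.
    apply squeeze_zero with
      (d := fun k => (/ (eps * alpha) + beta) * (hnorm z + C) * hnorm (hsub (x (rho k)) (p (rho k)))).
    intro k. apply residual_bound. intro n. apply HC.
    rewrite <- (Rmult_0_r ((/ (eps * alpha) + beta) * (hnorm z + C))). apply cv_scale.
    apply (cv_subseq rho (fun n => hnorm (hsub (x n) (p n)))); auto. }
  destruct (Hck (c' - cz)) as [K0 HK0]. unfold cz in *. lra.
  assert (Hlevel : forall k, (k >= K0)%nat -> ele (f (p (rho k))) (Fin c')).
  { intros k Hk. destruct (prox_finite (rho k)) as [fp Hfp]. rewrite Hfp. simpl.
    assert (H := prox_gap (rho k) z fz fp Hfz Hfp). specialize (HK0 k Hk).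
    unfold R_dist in HK0. apply Rabs_def2 in HK0. lra. }
  apply (weak_closed (fun w : K => ele (f w) (Fin c')) (p (rho K0)))
    with (u := fun k => p (rho (k + K0)%nat)).
  - apply Hlevel. lia.
  - apply level_convex. auto.
  - apply level_closed. auto.
  - intro k. apply Hlevel. lia.
  - apply (weak_subseq (fun k => (k + K0)%nat) (fun k => p (rho k))). intro; lia. auto.
Qed.

Lemma cluster_solution (rho : nat -> nat) xt :
  (forall k, (k <= rho k)%nat) -> weak_cv (fun k => x (rho k)) xt -> VI_solution f B xt.
Proof.
  intros Hrho Hw. assert (Hlevel := cluster_level_bound rho xt Hrho Hw).
  destruct Hprop as [z0 Hz0]. destruct (f z0) as [fz0|] eqn:Ez0; [|congruence].
  assert (H0 := Hlevel z0 fz0 Ez0 _ (Rlt_plus_1 _)).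
  destruct (f xt) as [v|] eqn:Ev; [|contradiction].
  apply (minty f Hconv B beta xt v Hlip Ev). intros z fz Hfz.
  apply Rnot_lt_le. intro Hlt.
  assert (H := Hlevel z fz Hfz ((fz + inner (B z) (hsub z xt) + v) / 2) ltac:(lra)).
  simpl in H. lra.
Qed.

Theorem algorithm_weak_cv : exists xb, VI_solution f B xb /\ weak_cv x xb.
Proof.
  apply (decreasing_metric_opial Vn (/ (mu * weight_bound eta)) alpha Vn_lower_pos Ha
           Vn_lin Vn_sa Vn_lower Vn_norm Vn_decr x _ fejer_solutions Hsol cluster_solution).
Qed.

End Algorithm.

Theorem mainTheorem2
  (K : HilbertSpace) (f : K -> ereal) (alpha beta : R) (B : K -> K)
  (eta : nat -> R) (U : nat -> K -> K) (mu : R) (eps : R)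
  (gamma : nat -> R) (x y p q : nat -> K) :
  proper f -> lsc f -> convex f ->
  0 < alpha -> 0 < beta ->
  monotone B -> lipschitz beta B ->
  (forall n, 0 <= eta n) -> (exists l, infinite_sum eta l) ->
  (forall n, P_alpha alpha (U n)) ->
  is_lub (fun r => exists n, is_opnorm (U n) r) mu ->
  (forall n, loewner_ge (fun z => hscal K (1 + eta n) (U (S n) z)) (U n)) ->
  0 < eps < Rmin 1 (1 / (mu * beta + 1)) ->
  (forall n, eps <= gamma n <= (1 - eps) / (beta * mu)) ->
  (exists xb, VI_solution f B xb) ->
  (forall n, y n = hsub (x n) (hscal K (gamma n) (U n (B (x n))))) ->
  (forall n, forall z : K,
      ele (eaddr (1 / (2 * gamma n) * (Mnorm (inv_op (U n)) (hsub (p n) (y n))) ^ 2) (f (p n)))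
          (eaddr (1 / (2 * gamma n) * (Mnorm (inv_op (U n)) (hsub z (y n))) ^ 2) (f z))) ->
  (forall n, q n = hsub (p n) (hscal K (gamma n) (U n (B (p n))))) ->
  (forall n, x (S n) = hadd K (hsub (x n) (y n)) (q n)) ->
  exists xb, VI_solution f B xb /\ weak_cv x xb.
Proof.
  exact (algorithm_weak_cv K f alpha beta B eta U mu eps gamma x y p q).
Qed.
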